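(* Let two meters be coupled at times $t_1<t_2$, so that the composite state is $|\Psi\rangle=\hat T_{f,2}\,e^{-\imath g\hat A_2\otimes\hat p_2/\hbar}\,\hat T_{2,1}\,e^{-\imath g\hat A_1\otimes\hat p_1/\hbar}\,\hat T_{1,i}\,|\psi_i\rangle|\phi\rangle_1|\phi\rangle_2$, and post-select the system on $|\psi_f\rangle$, giving the two-meter state $|\Phi_f\rangle=\langle\psi_f|\Psi\rangle$. Let $\langle x_1x_2\rangle$ be the mean of $x_1x_2$ in the normalized distribution $|\langle x_1,x_2|\Phi_f\rangle|^2$ and $\langle k_1k_2\rangle$ the mean of $k_1k_2$ in the normalized distribution $|\langle k_1,k_2|\Phi_f\rangle|^2$. Then, as $g\to0$, $$\langle x_1x_2\rangle=\frac{g^2}{2}\mathrm{Re}\Big[(A_2,A_1)_w+\overline{(A_1)_w}(A_2)_w\Big]+O(g^3),$$ $$\langle k_1k_2\rangle=\frac{g^2}{8\sigma^4}\mathrm{Re}\Big[-(A_2,A_1)_w+\overline{(A_1)_w}(A_2)_w\Big]+O(g^3),$$ and consequently $$\mathrm{Re}\big[(A_2,A_1)_w\big]=\frac{1}{g^2}\Big(\langle x_1x_2\rangle-4\sigma^4\langle k_1k_2\rangle\Big)+O(g).$$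
   Context: $\mathcal H$ is a finite-dimensional system Hilbert space with self-adjoint operators $\hat A_1,\hat A_2$; times $t_i<t_1<t_2<t_f$ with unitary system evolutions $\hat T_{b,a}$ satisfying $\hat T_{c,b}\hat T_{b,a}=\hat T_{c,a}$; unit vectors $|\psi_i\rangle,|\psi_f\rangle$ with $\langle\psi_f|\hat T_{f,i}|\psi_i\rangle\neq0$. Weak values: $(A_1)_w=\langle\psi_f|\hat T_{f,1}\hat A_1\hat T_{1,i}|\psi_i\rangle/\langle\psi_f|\hat T_{f,i}|\psi_i\rangle$, $(A_2)_w=\langle\psi_f|\hat T_{f,2}\hat A_2\hat T_{2,i}|\psi_i\rangle/\langle\psi_f|\hat T_{f,i}|\psi_i\rangle$, and the sequential weak value $(A_2,A_1)_w=\langle\psi_f|\hat T_{f,2}\hat A_2\hat T_{2,1}\hat A_1\hat T_{1,i}|\psi_i\rangle/\langle\psi_f|\hat T_{f,i}|\psi_i\rangle$; $\overline{z}$ denotes complex conjugation. Each meter $r=1,2$ is a particle on $\mathbb R$ with position $\hat x_r$, momentum $\hat p_r=\hbar\hat k_r=-\imath\hbar\,\partial/\partial x_r$, initially in the real Gaussian $\phi(x)=(2\pi\sigma^2)^{-1/4}e^{-x^2/(4\sigma^2)}$ ($\sigma>0$), with wave-number representation $\tilde\phi(k)=(2\sigma^2/\pi)^{1/4}e^{-k^2\sigma^2}$; meters have no free Hamiltonian; $g>0$ is the small coupling constant. *)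

From Stdlib Require Import Reals Lra.
Open Scope R_scope.

Record C := mkC { Re : R ; Im : R }.
Definition C0 : C := mkC 0 0.
Definition C1 : C := mkC 1 0.
Definition RtoC (r : R) : C := mkC r 0.
Definition Cadd (z w : C) : C := mkC (Re z + Re w) (Im z + Im w).
Definition Cmul (z w : C) : C :=
  mkC (Re z * Re w - Im z * Im w) (Re z * Im w + Im z * Re w).
Definition Cconj (z : C) : C := mkC (Re z) (- Im z).
Definition Cnorm2 (z : C) : R := Re z * Re z + Im z * Im z.
Definition Cinv (z : C) : C := mkC (Re z / Cnorm2 z) (- Im z / Cnorm2 z).
Definition Cdiv (z w : C) : C := Cmul z (Cinv w).
Definition Cexpi (theta : R) : C := mkC (cos theta) (sin theta).

Fixpoint Csum (n : nat) (f : nat -> C) : C :=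
  match n with O => C0 | S m => Cadd (Csum m f) (f m) end.

(* vectors / operators: only the components with indices < n are meaningful *)
Definition Vec := nat -> C.
Definition Mat := nat -> nat -> C.

Definition inner (n : nat) (u v : Vec) : C := Csum n (fun i => Cmul (Cconj (u i)) (v i)).
Definition mv (n : nat) (M : Mat) (v : Vec) : Vec := fun i => Csum n (fun j => Cmul (M i j) (v j)).
Definition mm (n : nat) (M N : Mat) : Mat := fun i k => Csum n (fun j => Cmul (M i j) (N j k)).
Definition adj (M : Mat) : Mat := fun i j => Cconj (M j i).
Definition idm : Mat := fun i j => if Nat.eqb i j then C1 else C0.
Definition vsum (n : nat) (V : nat -> Vec) : Vec := fun i => Csum n (fun j => V j i).
Definition vscale (z : C) (v : Vec) : Vec := fun i => Cmul z (v i).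
Definition proj (u : Vec) : Mat := fun i j => Cmul (u i) (Cconj (u j)).

Definition unit_vec (n : nat) (v : Vec) : Prop := inner n v v = C1.
Definition self_adjoint (n : nat) (A : Mat) : Prop :=
  forall i j, (i < n)%nat -> (j < n)%nat -> A i j = Cconj (A j i).
Definition unitary (n : nat) (U : Mat) : Prop :=
  forall i j, (i < n)%nat -> (j < n)%nat ->
    mm n (adj U) U i j = idm i j /\ mm n U (adj U) i j = idm i j.

Definition spectral_decomp (n : nat) (A : Mat) (u : nat -> Vec) (a : nat -> R) : Prop :=
  (forall j k, (j < n)%nat -> (k < n)%nat -> inner n (u j) (u k) = idm j k) /\
  (forall i k, (i < n)%nat -> (k < n)%nat ->
     A i k = Csum n (fun j => Cmul (RtoC (a j)) (proj (u j) i k))).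

(* T_{f,i} = T_{f,2} T_{2,1} T_{1,i}, T_{f,1} = T_{f,2} T_{2,1}, T_{2,i} = T_{2,1} T_{1,i} *)
Definition amp0 n (T1i T21 Tf2 : Mat) (pi pf : Vec) : C :=
  inner n pf (mv n Tf2 (mv n T21 (mv n T1i pi))).
Definition weak1 n (A1 T1i T21 Tf2 : Mat) (pi pf : Vec) : C :=
  Cdiv (inner n pf (mv n Tf2 (mv n T21 (mv n A1 (mv n T1i pi)))))
       (amp0 n T1i T21 Tf2 pi pf).
Definition weak2 n (A2 T1i T21 Tf2 : Mat) (pi pf : Vec) : C :=
  Cdiv (inner n pf (mv n Tf2 (mv n A2 (mv n T21 (mv n T1i pi)))))
       (amp0 n T1i T21 Tf2 pi pf).
Definition weak21 n (A1 A2 T1i T21 Tf2 : Mat) (pi pf : Vec) : C :=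
  Cdiv (inner n pf (mv n Tf2 (mv n A2 (mv n T21 (mv n A1 (mv n T1i pi))))))
       (amp0 n T1i T21 Tf2 pi pf).

Definition phi (sigma x : R) : R :=
  Rpower (2 * PI * sigma ^ 2) (- / 4) * exp (- x ^ 2 / (4 * sigma ^ 2)).
Definition phit (sigma k : R) : R :=
  Rpower (2 * sigma ^ 2 / PI) (/ 4) * exp (- k ^ 2 * sigma ^ 2).

(* composite (system + two meters) states, H-valued functions of the two
   meter coordinates (positions x1 x2, or wave numbers k1 k2) *)
Definition St := R -> R -> Vec.

Definition init (f : R -> R) (psi : Vec) : St :=
  fun y1 y2 => vscale (RtoC (f y1 * f y2)) psi.
Definition applyT n (T : Mat) (Psi : St) : St := fun y1 y2 => mv n T (Psi y1 y2).

(* exp(-i g A (x) p_r / hbar) via the spectral decomposition of A: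
   sum_j |u_j><u_j| (x) exp(-i g a_j p_r / hbar), where exp(-i g a p/hbar)
   translates the position wavefunction by g a, and multiplies the
   wave-number wavefunction by exp(-i g a k). *)
Definition coupleX1 n (u : nat -> Vec) (a : nat -> R) (g : R) (Psi : St) : St :=
  fun x1 x2 => vsum n (fun j => mv n (proj (u j)) (Psi (x1 - g * a j) x2)).
Definition coupleX2 n (u : nat -> Vec) (a : nat -> R) (g : R) (Psi : St) : St :=
  fun x1 x2 => vsum n (fun j => mv n (proj (u j)) (Psi x1 (x2 - g * a j))).
Definition coupleK1 n (u : nat -> Vec) (a : nat -> R) (g : R) (Psi : St) : St :=
  fun k1 k2 => vsum n (fun j => vscale (Cexpi (- g * a j * k1)) (mv n (proj (u j)) (Psi k1 k2))).
Definition coupleK2 n (u : nat -> Vec) (a : nat -> R) (g : R) (Psi : St) : St :=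
  fun k1 k2 => vsum n (fun j => vscale (Cexpi (- g * a j * k2)) (mv n (proj (u j)) (Psi k1 k2))).

(* |Psi> = T_{f,2} e^{-igA2 p2} T_{2,1} e^{-igA1 p1} T_{1,i} |psi_i>|phi>|phi>,
   position representation, and |Phi_f>(x1,x2) = <psi_f|Psi(x1,x2)> *)
Definition PsiX n T1i T21 Tf2 (u1 u2 : nat -> Vec) (a1 a2 : nat -> R) sigma g (pi : Vec) : St :=
  applyT n Tf2 (coupleX2 n u2 a2 g (applyT n T21 (coupleX1 n u1 a1 g
     (applyT n T1i (init (phi sigma) pi))))).
Definition PsiK n T1i T21 Tf2 (u1 u2 : nat -> Vec) (a1 a2 : nat -> R) sigma g (pi : Vec) : St :=
  applyT n Tf2 (coupleK2 n u2 a2 g (applyT n T21 (coupleK1 n u1 a1 g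
     (applyT n T1i (init (phit sigma) pi))))).
Definition postsel n (pf : Vec) (Psi : St) : R -> R -> C := fun y1 y2 => inner n pf (Psi y1 y2).

Definition is_int_R (f : R -> R) (I : R) : Prop :=
  forall eps, 0 < eps -> exists M, forall a b, M <= a -> M <= b ->
    exists pr : Riemann_integrable f (- a) b, Rabs (RiemannInt pr - I) < eps.
(* integral over R^2 (iterated: inner variable y2, outer y1) *)
Definition is_int_R2 (F : R -> R -> R) (I : R) : Prop :=
  exists G : R -> R, (forall y1, is_int_R (fun y2 => F y1 y2) (G y1)) /\ is_int_R G I.

Definition mean2 (P h : R -> R -> R) (m : R) : Prop :=
  exists N M, is_int_R2 P N /\ N <> 0 /\
    is_int_R2 (fun y1 y2 => h y1 y2 * P y1 y2) M /\ m = M / N.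

(* Expanding both observables in their eigenbases, the post-selected two-meter wave
   function is a finite sum over eigenvalue histories (a1_j, a2_k) of the path
   amplitudes c_jk, weighted by displaced Gaussians in position and by phases
   e^{-i g (a1_j k1 + a2_k k2)} in wave number.  Both probability densities are
   therefore finite sums of Gaussian integrals known in closed form.  In position the
   normalization is K |amp0|^2 (1 + O(g^2)) and the x1 x2 moment is
   (g^2/4) K sum Re(conj c c') (a1_j + a1_j')(a2_k + a2_k') (1 + O(g^2)); in wave number
   the cosine and sine transforms of the Gaussian give Z^2 |amp0|^2 + O(g^2) and
   -g^2 Z2^2 sum Re(conj c c') (a1_j - a1_j')(a2_k - a2_k') + O(g^4).  These weighted
   sums are 2 Re(conj amp0 amp21) +- 2 Re(conj amp1 amp2), and Z2 = Z / (4 sigma^2)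
   by an integration by parts, which gives both expansions; subtracting 4 sigma^4
   times the second from the first isolates Re (A2,A1)_w. *)

From Pilot Require Import Defs.
From Stdlib Require Import Reals Lra Lia FunctionalExtensionality ClassicalEpsilon.
From mathcomp Require all_boot all_algebra Rstruct.
From mathcomp.real_closed Require complex.
From Coquelicot Require Import Rcomplements Hierarchy Continuity Derive RInt RInt_analysis AutoDerive.
From Coquelicot Require ElemFct.
Import Pilot.Defs.
Open Scope R_scope.

(** * Complex numbers and finite sums *)

Lemma C_ext (z w : C) : Re z = Re w -> Im z = Im w -> z = w.
Proof. destruct z, w; simpl; intros; subst; reflexivity. Qed.

Ltac C_unfold := unfold Cdiv, Cinv, Cnorm2, Cadd, Cmul, Cconj, RtoC, C0, C1, Cexpi in *; cbn [Re Im] in *.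
Ltac C_ring := apply C_ext; C_unfold; ring.

Fixpoint rsum (n : nat) (f : nat -> R) : R :=
  match n with O => 0 | S m => rsum m f + f m end.

Lemma Csum_ext n f g : (forall j, (j < n)%nat -> f j = g j) -> Csum n f = Csum n g.
Proof.
  induction n; simpl; intros H; auto.
  rewrite IHn, H by first [lia | intros; apply H; lia]; reflexivity.
Qed.

Lemma rsum_ext n f g : (forall j, (j < n)%nat -> f j = g j) -> rsum n f = rsum n g.
Proof.
  induction n; simpl; intros H; auto.
  rewrite IHn, H by first [lia | intros; apply H; lia]; reflexivity.
Qed.

Lemma Re_Csum n f : Re (Csum n f) = rsum n (fun j => Re (f j)).
Proof. induction n; simpl; auto. rewrite IHn; auto. Qed.

Lemma Im_Csum n f : Im (Csum n f) = rsum n (fun j => Im (f j)).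
Proof. induction n; simpl; auto. rewrite IHn; auto. Qed.

Lemma Cmul_Csum_l n z f : Cmul z (Csum n f) = Csum n (fun j => Cmul z (f j)).
Proof. induction n; simpl. C_ring. rewrite <- IHn. C_ring. Qed.

Lemma Cmul_Csum_r n f z : Cmul (Csum n f) z = Csum n (fun j => Cmul (f j) z).
Proof. induction n; simpl. C_ring. rewrite <- IHn. C_ring. Qed.

Lemma Csum_comm n m (f : nat -> nat -> C) :
  Csum n (fun j => Csum m (fun k => f j k)) = Csum m (fun k => Csum n (fun j => f j k)).
Proof.
  induction n; simpl.
  - induction m; simpl; auto. rewrite <- IHm. C_ring.
  - rewrite IHn. clear IHn. induction m; simpl. C_ring. rewrite <- IHm. C_ring.
Qed.

Lemma Csum_C0 n : Csum n (fun _ => C0) = C0.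
Proof. induction n; simpl; auto. rewrite IHn. C_ring. Qed.

Lemma Csum_idm n i (v : Vec) : (i < n)%nat -> Csum n (fun l => Cmul (idm i l) (v l)) = v i.
Proof.
  induction n; intros H; [lia|]. simpl. unfold idm at 2.
  destruct (Nat.eq_dec i n) as [->|ne].
  - rewrite Nat.eqb_refl, (Csum_ext _ _ (fun _ => C0)), Csum_C0. C_ring.
    intros l hl. unfold idm. replace (Nat.eqb n l) with false by (symmetry; apply Nat.eqb_neq; lia). C_ring.
  - rewrite IHn by lia. replace (Nat.eqb i n) with false by (symmetry; apply Nat.eqb_neq; lia). C_ring.
Qed.

Lemma rsum_plus n f g : rsum n (fun j => f j + g j) = rsum n f + rsum n g.
Proof. induction n; simpl. ring. rewrite IHn; ring. Qed.

Lemma rsum_scal n c f : rsum n (fun j => c * f j) = c * rsum n f.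
Proof. induction n; simpl. ring. rewrite IHn; ring. Qed.

Lemma rsum_mult n m f g : rsum n f * rsum m g = rsum n (fun j => rsum m (fun k => f j * g k)).
Proof.
  induction n; simpl. ring.
  rewrite <- IHn, Rmult_plus_distr_r. f_equal. rewrite <- rsum_scal. reflexivity.
Qed.

Lemma rsum_nonneg n f : (forall j, 0 <= f j) -> 0 <= rsum n f.
Proof. intros H. induction n; simpl. lra. pose proof (H n). lra. Qed.

Lemma rsum_dist_le n (h v L : nat -> R) c :
  (forall j, (j < n)%nat -> Rabs (h j - v j) <= c * L j) ->
  Rabs (rsum n h - rsum n v) <= c * rsum n L.
Proof.
  induction n; simpl; intros H. rewrite Rminus_0_r, Rabs_R0; lra.
  replace (rsum n h + h n - (rsum n v + v n)) with ((rsum n h - rsum n v) + (h n - v n)) by ring.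
  eapply Rle_trans. apply Rabs_triang. rewrite Rmult_plus_distr_l.
  apply Rplus_le_compat; [apply IHn; intros|]; apply H; lia.
Qed.

Module Orthonormal.
Import all_boot all_algebra Rstruct complex.
Import GRing.Theory.
Local Open Scope ring_scope.
Local Open Scope complex_scope.

Definition to_complex (z : Defs.C) : Rdefinitions.R[i] := Complex (Defs.Re z) (Defs.Im z).

Lemma to_complex_inj z w : to_complex z = to_complex w -> z = w.
Proof. by case: z => a b; case: w => c d /= [-> ->]. Qed.

Lemma to_complex_add z w : to_complex (Cadd z w) = to_complex z + to_complex w.
Proof. by case: z => a b; case: w => c d. Qed.

Lemma to_complex_mul z w : to_complex (Cmul z w) = to_complex z * to_complex w.
Proof. by case: z => a b; case: w => c d. Qed.

Lemma to_complex_Csum n f : to_complex (Csum n f) = \sum_(j < n) to_complex (f j).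
Proof.
elim: n => [|n IH]; first by rewrite big_ord0.
by rewrite big_ord_recr /= to_complex_add IH.
Qed.

Lemma to_complex_idm i j : to_complex (idm i j) = (i == j)%:R.
Proof. by rewrite /idm; case: (PeanoNat.Nat.eqb_spec i j) => [->|/eqP/negbTE->]; rewrite ?eqxx. Qed.

(* The coordinate matrix of the family has a left inverse, hence is invertible. *)
Lemma orthonormal_complete n (u : nat -> Vec) :
  (forall j k, (j < n)%coq_nat -> (k < n)%coq_nat -> inner n (u j) (u k) = idm j k) ->
  forall i l, (i < n)%coq_nat -> (l < n)%coq_nat ->
    Csum n (fun j => Cmul (u j i) (Cconj (u j l))) = idm i l.
Proof.
move=> orth i l /ltP hi /ltP hl.
pose U : 'M[Rdefinitions.R[i]]_n := \matrix_(a < n, b < n) to_complex (u b a).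
pose V : 'M[Rdefinitions.R[i]]_n := \matrix_(a < n, b < n) to_complex (Cconj (u a b)).
have VU : V *m U = 1%:M.
  apply/matrixP => j k; rewrite !mxE.
  move: (orth j k (ltP (ltn_ord j)) (ltP (ltn_ord k))).
  move/(congr1 to_complex); rewrite to_complex_idm /inner to_complex_Csum => <-.
  by apply: eq_bigr => a _; rewrite !mxE to_complex_mul.
move: (congr1 (fun M : 'M_n => M (Ordinal hi) (Ordinal hl)) (mulmx1C VU)).
rewrite /= !mxE => E; apply: to_complex_inj; rewrite to_complex_idm to_complex_Csum -E.
by apply: eq_bigr => a _; rewrite !mxE to_complex_mul.
Qed.
End Orthonormal.

(** * Expansion over eigenvalue histories *)

Lemma mv_vscale n M z v : mv n M (vscale z v) = vscale z (mv n M v).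
Proof.
  apply functional_extensionality; intro i. unfold mv, vscale.
  rewrite Cmul_Csum_l. apply Csum_ext; intros. C_ring.
Qed.

Lemma mv_vsum n m M V : mv n M (vsum m V) = vsum m (fun j => mv n M (V j)).
Proof.
  apply functional_extensionality; intro i. unfold mv, vsum.
  rewrite Csum_comm. apply Csum_ext; intros. apply Cmul_Csum_l.
Qed.

Lemma inner_vscale n u z v : inner n u (vscale z v) = Cmul z (inner n u v).
Proof. unfold inner, vscale. rewrite Cmul_Csum_l. apply Csum_ext; intros. C_ring. Qed.

Lemma inner_vsum n m u V : inner n u (vsum m V) = Csum m (fun j => inner n u (V j)).
Proof.
  unfold inner, vsum. rewrite Csum_comm. apply Csum_ext; intros. apply Cmul_Csum_l.
Qed.

Lemma mv_ext n M v w : (forall i, (i < n)%nat -> v i = w i) -> mv n M v = mv n M w.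
Proof.
  intros H. apply functional_extensionality; intro i. unfold mv.
  apply Csum_ext; intros. rewrite H; auto.
Qed.

Definition spectral_action n (u : nat -> Vec) (al : nat -> R) (X : Vec -> Vec) : Prop :=
  forall v i, (i < n)%nat -> X v i = vsum n (fun j => vscale (RtoC (al j)) (mv n (proj (u j)) v)) i.

Section Spectral.
Variables (n : nat) (A : Mat) (u : nat -> Vec) (a : nat -> R).
Hypothesis HA : spectral_decomp n A u a.

Lemma spectral_action_id : spectral_action n u (fun _ => 1) (fun v => v).
Proof.
  destruct HA as [orth _]. intros v i hi. unfold vsum, vscale, mv, proj.
  transitivity (Csum n (fun l => Cmul (Csum n (fun j => Cmul (u j i) (Cconj (u j l)))) (v l))).
  - rewrite <- (Csum_idm n i v hi) at 1. apply Csum_ext; intros l hl.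
    rewrite (Orthonormal.orthonormal_complete n u orth i l hi hl). reflexivity.
  - rewrite (Csum_ext n _ (fun l => Csum n (fun j => Cmul (Cmul (u j i) (Cconj (u j l))) (v l))))
      by (intros; apply Cmul_Csum_r).
    rewrite Csum_comm. apply Csum_ext; intros j _.
    rewrite Cmul_Csum_l. apply Csum_ext; intros. C_ring.
Qed.

Lemma spectral_action_mv : spectral_action n u a (mv n A).
Proof.
  destruct HA as [_ HAsum]. intros v i hi. unfold vsum, mv, vscale.
  rewrite (Csum_ext n _ (fun l => Csum n (fun j => Cmul (Cmul (RtoC (a j)) (proj (u j) i l)) (v l))))
    by (intros l hl; rewrite HAsum, Cmul_Csum_r by auto; reflexivity).
  rewrite Csum_comm. apply Csum_ext; intros j _.
  rewrite Cmul_Csum_l. apply Csum_ext; intros. C_ring.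
Qed.
End Spectral.

Definition dsum n (X : nat -> nat -> C) : C := Csum n (fun k => Csum n (fun j => X j k)).

(* The amplitude of the history "eigenvalue a1_j at t1, then a2_k at t2". *)
Definition path_amp n (T1i T21 Tf2 : Mat) (u1 u2 : nat -> Vec) (pi pf : Vec) j k : C :=
  inner n pf (mv n Tf2 (mv n (proj (u2 k)) (mv n T21 (mv n (proj (u1 j)) (mv n T1i pi))))).

Section PathExpansion.
Variables (n : nat) (T1i T21 Tf2 : Mat) (u1 u2 : nat -> Vec) (pi pf : Vec).
Local Notation c := (path_amp n T1i T21 Tf2 u1 u2 pi pf).

Lemma sandwich_expand (X1 X2 : Vec -> Vec) al be :
  spectral_action n u1 al X1 -> spectral_action n u2 be X2 ->
  inner n pf (mv n Tf2 (X2 (mv n T21 (X1 (mv n T1i pi))))) =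
  dsum n (fun j k => Cmul (RtoC (be k * al j)) (c j k)).
Proof.
  intros H1 H2. unfold dsum.
  rewrite (mv_ext n Tf2 _ _ (H2 _)), (mv_ext n T21 _ _ (H1 _)).
  rewrite mv_vsum, inner_vsum. apply Csum_ext; intros k _.
  rewrite !mv_vscale, inner_vscale, !mv_vsum, inner_vsum, Cmul_Csum_l.
  apply Csum_ext; intros j _.
  rewrite !mv_vscale, !inner_vscale. unfold path_amp. C_ring.
Qed.

Lemma postsel_PsiX_expand a1 a2 sigma g x1 x2 :
  postsel n pf (PsiX n T1i T21 Tf2 u1 u2 a1 a2 sigma g pi) x1 x2 =
  dsum n (fun j k => Cmul (RtoC (phi sigma (x1 - g * a1 j) * phi sigma (x2 - g * a2 k))) (c j k)).
Proof.
  unfold postsel, PsiX, applyT, coupleX2, coupleX1, init, dsum.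
  rewrite mv_vsum, inner_vsum. apply Csum_ext; intros k _.
  rewrite !mv_vsum, inner_vsum. apply Csum_ext; intros j _.
  rewrite !mv_vscale, inner_vscale. reflexivity.
Qed.

Lemma postsel_PsiK_expand a1 a2 sigma g k1 k2 :
  postsel n pf (PsiK n T1i T21 Tf2 u1 u2 a1 a2 sigma g pi) k1 k2 =
  dsum n (fun j k => Cmul (Cmul (Cexpi (- g * a2 k * k2))
        (Cmul (Cexpi (- g * a1 j * k1)) (RtoC (phit sigma k1 * phit sigma k2)))) (c j k)).
Proof.
  unfold postsel, PsiK, applyT, coupleK2, coupleK1, init, dsum.
  rewrite mv_vsum, inner_vsum. apply Csum_ext; intros k _.
  rewrite !mv_vscale, inner_vscale, !mv_vsum, inner_vsum, Cmul_Csum_l.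
  apply Csum_ext; intros j _.
  rewrite !mv_vscale, !inner_vscale. unfold path_amp. C_ring.
Qed.
End PathExpansion.

Definition rsum4 n (F : nat -> nat -> nat -> nat -> R) : R :=
  rsum n (fun k => rsum n (fun k' => rsum n (fun j => rsum n (fun j' => F k k' j j')))).

Lemma rsum4_ext n F G :
  (forall k k' j j', (k < n)%nat -> (k' < n)%nat -> (j < n)%nat -> (j' < n)%nat ->
     F k k' j j' = G k k' j j') ->
  rsum4 n F = rsum4 n G.
Proof.
  intros H. unfold rsum4.
  apply rsum_ext; intros. apply rsum_ext; intros. apply rsum_ext; intros. apply rsum_ext; intros. auto.
Qed.

Lemma rsum4_plus n F G :
  rsum4 n (fun k k' j j' => F k k' j j' + G k k' j j') = rsum4 n F + rsum4 n G.
Proof.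
  unfold rsum4. rewrite <- rsum_plus. apply rsum_ext; intros. rewrite <- rsum_plus.
  apply rsum_ext; intros. rewrite <- rsum_plus. apply rsum_ext; intros. apply rsum_plus.
Qed.

Lemma rsum4_scal n c F : rsum4 n (fun k k' j j' => c * F k k' j j') = c * rsum4 n F.
Proof.
  unfold rsum4. rewrite <- rsum_scal. apply rsum_ext; intros. rewrite <- rsum_scal.
  apply rsum_ext; intros. rewrite <- rsum_scal. apply rsum_ext; intros. apply rsum_scal.
Qed.

Lemma rsum4_nonneg n F : (forall k k' j j', 0 <= F k k' j j') -> 0 <= rsum4 n F.
Proof. intros H. unfold rsum4. repeat (apply rsum_nonneg; intros). auto. Qed.

Lemma rsum4_dist_le n h v L c :
  (forall k k' j j', (k < n)%nat -> (k' < n)%nat -> (j < n)%nat -> (j' < n)%nat ->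
     Rabs (h k k' j j' - v k k' j j') <= c * L k k' j j') ->
  Rabs (rsum4 n h - rsum4 n v) <= c * rsum4 n L.
Proof.
  intros H. unfold rsum4.
  apply rsum_dist_le; intros. apply rsum_dist_le; intros.
  apply rsum_dist_le; intros. apply rsum_dist_le; intros. auto.
Qed.

Lemma rsum4_weighted_dist_le n V X Y L e :
  (forall k k' j j', (k < n)%nat -> (k' < n)%nat -> (j < n)%nat -> (j' < n)%nat ->
     Rabs (X k k' j j' - Y k k' j j') <= e * L k k' j j') ->
  Rabs (rsum4 n (fun k k' j j' => V k k' j j' * X k k' j j') -
        rsum4 n (fun k k' j j' => V k k' j j' * Y k k' j j')) <=
  e * rsum4 n (fun k k' j j' => Rabs (V k k' j j') * L k k' j j').
Proof.
  intros H. apply rsum4_dist_le. intros k k' j j' hk hk' hj hj'.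
  rewrite <- Rmult_minus_distr_l, Rabs_mult.
  replace (e * (Rabs (V k k' j j') * L k k' j j')) with (Rabs (V k k' j j') * (e * L k k' j j')) by ring.
  apply Rmult_le_compat_l; [apply Rabs_pos | auto].
Qed.

Lemma rsum4_mult n f h :
  rsum n (fun k => rsum n (fun j => f j k)) * rsum n (fun k' => rsum n (fun j' => h j' k')) =
  rsum4 n (fun k k' j j' => f j k * h j' k').
Proof.
  unfold rsum4. rewrite rsum_mult. apply rsum_ext; intros. apply rsum_ext; intros. apply rsum_mult.
Qed.

(* [ipr z w = Re (conj z * w)], the real inner product of C = R^2. *)
Definition ipr (z w : C) : R := Re z * Re w + Im z * Im w.

Lemma ipr_dsum n X Y :
  ipr (dsum n X) (dsum n Y) = rsum4 n (fun k k' j j' => ipr (X j k) (Y j' k')).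
Proof.
  assert (HRe : forall Z, Re (dsum n Z) = rsum n (fun k => rsum n (fun j => Re (Z j k)))).
  { intros Z. unfold dsum. rewrite Re_Csum. apply rsum_ext; intros. apply Re_Csum. }
  assert (HIm : forall Z, Im (dsum n Z) = rsum n (fun k => rsum n (fun j => Im (Z j k)))).
  { intros Z. unfold dsum. rewrite Im_Csum. apply rsum_ext; intros. apply Im_Csum. }
  unfold ipr at 1. rewrite HRe, HRe, HIm, HIm, !rsum4_mult. symmetry; apply rsum4_plus.
Qed.

Lemma ipr_comm z w : ipr z w = ipr w z.
Proof. unfold ipr. ring. Qed.

Lemma Cnorm2_pos z : z <> C0 -> 0 < Cnorm2 z.
Proof.
  intros hz. destruct z as [x y]. unfold Cnorm2; cbn [Re Im].
  destruct (Req_dec x 0) as [->|hx]; [destruct (Req_dec y 0) as [->|hy]|].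
  - exfalso. apply hz. reflexivity.
  - pose proof (Rsqr_pos_lt y hy). unfold Rsqr in *. nra.
  - pose proof (Rsqr_pos_lt x hx). unfold Rsqr in *. nra.
Qed.

Lemma Re_Cadd z w : Re (Cadd z w) = Re z + Re w.
Proof. reflexivity. Qed.

Lemma Re_Cmul_RtoC r z : Re (Cmul (RtoC r) z) = r * Re z.
Proof. simpl. ring. Qed.

Lemma Re_Cdiv z w : Cnorm2 w <> 0 -> Re (Cdiv z w) = ipr z w / Cnorm2 w.
Proof.
  intros h. destruct z as [a b], w as [c d]. unfold ipr. C_unfold. field. auto.
Qed.

Lemma Re_Cconj_Cdiv_mul z z' w : Cnorm2 w <> 0 ->
  Re (Cmul (Cconj (Cdiv z w)) (Cdiv z' w)) = ipr z z' / Cnorm2 w.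
Proof.
  intros h. destruct z as [a b], z' as [a' b'], w as [c d].
  unfold ipr. C_unfold. field. auto.
Qed.

(** * Improper integrals over R and R^2 *)

Definition continuous_R (f : R -> R) : Prop := forall x, continuous f x.

Definition is_RInt_R (f : R -> R) (I : R) : Prop :=
  forall eps, 0 < eps -> exists M, forall a b, M <= a -> M <= b -> Rabs (RInt f (- a) b - I) < eps.

Definition is_cRInt_R (f : R -> R) (I : R) : Prop := continuous_R f /\ is_RInt_R f I.

Definition RInt_R (f : R -> R) : R := epsilon (inhabits 0) (is_RInt_R f).

Lemma ex_RInt_continuous_R f a b : continuous_R f -> ex_RInt f a b.
Proof. intros H. apply (@ex_RInt_continuous R_CompleteNormedModule). intros; apply H. Qed.

Lemma continuous_R_const c : continuous_R (fun _ => c).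
Proof. intros x. apply continuous_const. Qed.

Lemma continuous_R_plus f g : continuous_R f -> continuous_R g -> continuous_R (fun x => f x + g x).
Proof. intros Hf Hg x. apply (continuous_plus f g x); auto. Qed.

Lemma continuous_R_mult f g : continuous_R f -> continuous_R g -> continuous_R (fun x => f x * g x).
Proof. intros Hf Hg x. apply (continuous_mult f g x); auto. Qed.

Lemma continuous_R_ext f g : (forall x, f x = g x) -> continuous_R f -> continuous_R g.
Proof. intros E H x. apply (continuous_ext f g x E (H x)). Qed.

Lemma continuous_R_derive f : (forall x, ex_derive f x) -> continuous_R f.
Proof. intros H x. apply (@ex_derive_continuous R_AbsRing R_NormedModule). auto. Qed.

Lemma continuous_R_cos_mul g : continuous_R (fun k => cos (g * k)).
Proof. apply continuous_R_derive. intros; auto_derive; auto. Qed.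

Lemma continuous_R_sin_mul g : continuous_R (fun k => sin (g * k)).
Proof. apply continuous_R_derive. intros; auto_derive; auto. Qed.

Lemma continuous_R_id : continuous_R (fun k => k).
Proof. intros x; apply continuous_id. Qed.

Lemma is_RInt_R_ext f g I : (forall x, f x = g x) -> is_RInt_R f I -> is_RInt_R g I.
Proof. intros E. replace g with f; auto. apply functional_extensionality; auto. Qed.

Lemma is_cRInt_R_ext f g I : (forall x, f x = g x) -> is_cRInt_R f I -> is_cRInt_R g I.
Proof.
  intros E [Hc HI]. split; [eapply continuous_R_ext | eapply is_RInt_R_ext]; eauto.
Qed.

Lemma is_cRInt_R_plus f g I J :
  is_cRInt_R f I -> is_cRInt_R g J -> is_cRInt_R (fun x => f x + g x) (I + J).
Proof.
  intros [Hf If] [Hg Ig]. split; [apply continuous_R_plus; auto|].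
  intros eps He. destruct (If (eps / 2)) as [M1 HM1]; [lra|].
  destruct (Ig (eps / 2)) as [M2 HM2]; [lra|].
  exists (Rmax M1 M2). intros a b Ha Hb.
  pose proof (Rmax_l M1 M2). pose proof (Rmax_r M1 M2).
  specialize (HM1 a b ltac:(lra) ltac:(lra)). specialize (HM2 a b ltac:(lra) ltac:(lra)).
  rewrite (RInt_plus f g) by (apply ex_RInt_continuous_R; auto).
  replace (plus (RInt f (- a) b) (RInt g (- a) b) - (I + J))
    with ((RInt f (- a) b - I) + (RInt g (- a) b - J)) by (unfold plus; simpl; ring).
  eapply Rle_lt_trans. apply Rabs_triang. lra.
Qed.

Lemma is_cRInt_R_scal c f I : is_cRInt_R f I -> is_cRInt_R (fun x => c * f x) (c * I).
Proof.
  intros [Hf If]. split; [apply continuous_R_mult; auto; apply continuous_R_const|].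
  intros eps He. pose proof (Rabs_pos c).
  destruct (If (eps / (Rabs c + 1))) as [M HM]; [apply Rdiv_lt_0_compat; lra|].
  exists M. intros a b Ha Hb. specialize (HM a b Ha Hb).
  rewrite (RInt_scal f) by (apply ex_RInt_continuous_R; auto).
  replace (scal c (RInt f (- a) b) - c * I) with (c * (RInt f (- a) b - I))
    by (unfold scal; simpl; unfold mult; simpl; ring).
  rewrite Rabs_mult.
  apply Rle_lt_trans with ((Rabs c + 1) * Rabs (RInt f (- a) b - I)).
  - apply Rmult_le_compat_r; [apply Rabs_pos | lra].
  - apply Rlt_le_trans with ((Rabs c + 1) * (eps / (Rabs c + 1))).
    + apply Rmult_lt_compat_l; lra.
    + right; field; lra.
Qed.

Lemma is_cRInt_R_const0 : is_cRInt_R (fun _ => 0) 0.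
Proof.
  split; [apply continuous_R_const|]. intros eps He. exists 0. intros a b _ _.
  rewrite RInt_const. unfold scal; simpl; unfold mult; simpl.
  rewrite Rmult_0_r, Rminus_0_r, Rabs_R0; auto.
Qed.

Lemma is_RInt_R_le f h I J : continuous_R f -> continuous_R h ->
  is_RInt_R f I -> is_RInt_R h J -> (forall x, f x <= h x) -> I <= J.
Proof.
  intros cf ch HI HJ Hle. apply Rnot_lt_le; intros Hlt.
  destruct (HI ((I - J) / 2)) as [M1 H1]; [lra|]. destruct (HJ ((I - J) / 2)) as [M2 H2]; [lra|].
  set (M := Rmax 0 (Rmax M1 M2)).
  assert (M1 <= M) by (unfold M; eapply Rle_trans; [apply Rmax_l|apply Rmax_r]).
  assert (M2 <= M) by (unfold M; eapply Rle_trans; [apply Rmax_r|apply Rmax_r]).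
  assert (0 <= M) by apply Rmax_l.
  specialize (H1 M M ltac:(lra) ltac:(lra)). specialize (H2 M M ltac:(lra) ltac:(lra)).
  assert (RInt f (- M) M <= RInt h (- M) M)
    by (apply RInt_le; [lra | apply ex_RInt_continuous_R; auto .. | intros; auto]).
  apply Rabs_def2 in H1. apply Rabs_def2 in H2. lra.
Qed.

Lemma is_cRInt_R_nonneg f I : is_cRInt_R f I -> (forall x, 0 <= f x) -> 0 <= I.
Proof.
  intros [cf HI] H. destruct is_cRInt_R_const0 as [c0 H0].
  exact (is_RInt_R_le _ f 0 I c0 cf H0 HI H).
Qed.

Lemma is_RInt_R_abs_le f h I J : continuous_R f -> continuous_R h ->
  is_RInt_R f I -> is_RInt_R h J -> (forall x, Rabs (f x) <= h x) -> Rabs I <= J.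
Proof.
  intros cf ch HI HJ Hle.
  destruct (is_cRInt_R_scal (-1) h J (conj ch HJ)) as [cnh HnJ].
  apply Rabs_le; split.
  - enough (-1 * J <= I) by lra.
    apply (is_RInt_R_le (fun x => -1 * h x) f); auto.
    intros x. specialize (Hle x). apply Rabs_le_between in Hle. lra.
  - apply (is_RInt_R_le f h); auto.
    intros x. specialize (Hle x). apply Rabs_le_between in Hle. lra.
Qed.

Lemma RInt_odd_sym f a : continuous_R f -> (forall x, f (- x) = - f x) -> RInt f (- a) a = 0.
Proof.
  intros cf Hodd.
  assert (E : RInt (fun y => scal (-1) (f (-1 * y + 0))) (- a) a = RInt f (-1 * - a + 0) (-1 * a + 0))
    by (apply (RInt_comp_lin (V := R_CompleteNormedModule)); apply ex_RInt_continuous_R; auto).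
  replace (-1 * - a + 0) with a in E by ring. replace (-1 * a + 0) with (- a) in E by ring.
  rewrite <- (opp_RInt_swap (V := R_CompleteNormedModule) f (- a) a) in E
    by (apply ex_RInt_continuous_R; auto).
  rewrite (RInt_ext _ f) in E.
  - unfold opp in E; simpl in E. lra.
  - intros x _. unfold scal; simpl; unfold mult; simpl.
    replace (-1 * x + 0) with (- x) by ring. rewrite Hodd. ring.
Qed.

Lemma is_RInt_R_odd f I : continuous_R f -> (forall x, f (- x) = - f x) -> is_RInt_R f I -> I = 0.
Proof.
  intros cf Hodd HI. apply Rabs_eq_0. apply Rle_antisym; [|apply Rabs_pos].
  apply Rnot_lt_le; intros Hp. destruct (HI (Rabs I)) as [M HM]; auto.
  specialize (HM M M (Rle_refl _) (Rle_refl _)). rewrite RInt_odd_sym in HM by auto.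
  rewrite Rminus_0_l, Rabs_Ropp in HM. lra.
Qed.

Lemma is_cRInt_R_shift f I m : is_cRInt_R f I -> is_cRInt_R (fun x => f (x - m)) I.
Proof.
  intros [cf HI]. split.
  - intros x. apply (continuous_comp (fun x => x - m) f); [|apply cf].
    apply (continuous_plus (fun x => x) (fun _ => - m)); [apply continuous_id | apply continuous_const].
  - intros eps He. destruct (HI eps He) as [M HM]. exists (M + Rabs m). intros a b Ha Hb.
    assert (E : RInt (fun y => scal 1 (f (1 * y + - m))) (- a) b = RInt f (1 * - a + - m) (1 * b + - m))
      by (apply (RInt_comp_lin (V := R_CompleteNormedModule)); apply ex_RInt_continuous_R; auto).
    rewrite (RInt_ext _ (fun x => f (x - m))) in E.
    + rewrite E. replace (1 * - a + - m) with (- (a + m)) by ring.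
      replace (1 * b + - m) with (b - m) by ring.
      pose proof (Rle_abs m). pose proof (Rle_abs (- m)). rewrite Rabs_Ropp in *.
      apply HM; lra.
    + intros x _. unfold scal; simpl; unfold mult; simpl. rewrite !Rmult_1_l. reflexivity.
Qed.

Lemma is_cRInt_R_is_int_R f I : is_cRInt_R f I -> is_int_R f I.
Proof.
  intros [cf HI] eps He. destruct (HI eps He) as [M HM]. exists M. intros a b Ha Hb.
  exists (ex_RInt_Reals_0 f (- a) b (ex_RInt_continuous_R f (- a) b cf)).
  rewrite <- RInt_Reals. auto.
Qed.

Lemma is_cRInt_R_abs_le f h I J :
  is_cRInt_R f I -> is_cRInt_R h J -> (forall x, Rabs (f x) <= h x) -> Rabs I <= J.
Proof. intros [cf HI] [ch HJ]. apply (is_RInt_R_abs_le f h); auto. Qed.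

Lemma is_cRInt_R_sub f h I J :
  is_cRInt_R f I -> is_cRInt_R h J -> is_cRInt_R (fun x => f x - h x) (I - J).
Proof.
  intros Hf Hh. replace (I - J) with (I + -1 * J) by ring.
  eapply is_cRInt_R_ext; [|apply (is_cRInt_R_plus _ _ _ _ Hf (is_cRInt_R_scal (-1) _ _ Hh))].
  intros; simpl; ring.
Qed.

Lemma div_lt_of_div_lt c X eps : 0 <= c -> 0 < eps -> c / eps < X -> c / X < eps.
Proof.
  intros hc he hX. assert (0 <= c / eps) by (apply Rdiv_le_0_compat; lra).
  apply Rlt_div_l; [lra|]. apply Rlt_div_l in hX; auto. lra.
Qed.

Lemma is_RInt_inv_sq B u v : u <= v -> (0 < u \/ v < 0) ->
  is_RInt (fun t => B / (t * t)) u v (B / u - B / v).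
Proof.
  intros huv hsgn.
  assert (hnz : forall x, u <= x <= v -> x <> 0) by (intros x Hx; destruct hsgn; lra).
  replace (B / u - B / v) with (minus ((fun t => - B / t) v) ((fun t => - B / t) u))
    by (unfold minus, plus, opp; simpl; field; split; apply hnz; lra).
  apply (is_RInt_derive (V := R_CompleteNormedModule));
    intros x Hx; rewrite Rmin_left, Rmax_right in Hx by lra; pose proof (hnz x Hx).
  - auto_derive; [auto | field; auto].
  - apply (@ex_derive_continuous R_AbsRing R_NormedModule). auto_derive.
    apply Rmult_integral_contrapositive; auto.
Qed.

Section Dominated.
Variables (f : R -> R) (B : R).
Hypothesis cf : continuous_R f.
Hypothesis Hdom : forall x, Rabs (f x) <= B / (1 + x * x).

Lemma dom_bound_nonneg : 0 <= B.
Proof.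
  pose proof (Hdom 0). pose proof (Rabs_pos (f 0)).
  replace (1 + 0 * 0) with 1 in H by ring. lra.
Qed.

Lemma RInt_tail_le_ordered M u v : 1 <= M -> u <= v -> (M <= u \/ v <= - M) ->
  Rabs (RInt f u v) <= B / M.
Proof.
  intros hM huv hside. pose proof dom_bound_nonneg.
  assert (Hint : is_RInt (fun t => B / (t * t)) u v (B / u - B / v))
    by (apply is_RInt_inv_sq; lra).
  apply Rle_trans with (B / u - B / v).
  { eapply Rle_trans; [apply abs_RInt_le; [auto | apply ex_RInt_continuous_R; auto]|].
    rewrite <- (is_RInt_unique _ u v _ Hint). apply RInt_le; auto.
    - apply ex_RInt_continuous_R. intros x.
      apply (continuous_comp f Rabs); [apply cf | apply ElemFct.continuous_Rabs].
    - eexists; eauto.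
    - intros t Ht. eapply Rle_trans; [apply Hdom|].
      apply Rmult_le_compat_l; auto. apply Rinv_le_contravar; nra. }
  unfold Rdiv. destruct hside.
  - assert (B * / u <= B * / M) by (apply Rmult_le_compat_l; auto; apply Rinv_le_contravar; lra).
    assert (0 <= B * / v) by (apply Rmult_le_pos; auto; left; apply Rinv_0_lt_compat; lra).
    lra.
  - assert (B * / (- v) <= B * / M) by (apply Rmult_le_compat_l; auto; apply Rinv_le_contravar; lra).
    assert (0 <= B * / (- u)) by (apply Rmult_le_pos; auto; left; apply Rinv_0_lt_compat; lra).
    replace (B * / u) with (- (B * / (- u))) by (field; lra).
    replace (B * / v) with (- (B * / (- v))) by (field; lra).
    lra.
Qed.

Lemma RInt_tail_le M u v : 1 <= M -> (M <= u /\ M <= v \/ u <= - M /\ v <= - M) ->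
  Rabs (RInt f u v) <= B / M.
Proof.
  intros hM hside. destruct (Rle_dec u v).
  - apply RInt_tail_le_ordered; auto; lra.
  - rewrite <- (opp_RInt_swap (V := R_CompleteNormedModule)) by (apply ex_RInt_continuous_R; auto).
    unfold opp; simpl. rewrite Rabs_Ropp. apply RInt_tail_le_ordered; auto; lra.
Qed.

Lemma RInt_tails_dist_le M a b a' b' : 1 <= M -> M <= a -> M <= b -> M <= a' -> M <= b' ->
  Rabs (RInt f (- a) b - RInt f (- a') b') <= 2 * B / M.
Proof.
  intros hM ha hb ha' hb'.
  rewrite <- (RInt_Chasles (V := R_CompleteNormedModule) f (- a) (- a') b)
    by (apply ex_RInt_continuous_R; auto).
  rewrite <- (RInt_Chasles (V := R_CompleteNormedModule) f (- a') b' b)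
    by (apply ex_RInt_continuous_R; auto).
  unfold plus; simpl.
  replace (RInt f (- a) (- a') + (RInt f (- a') b' + RInt f b' b) - RInt f (- a') b')
    with (RInt f (- a) (- a') + RInt f b' b) by ring.
  eapply Rle_trans; [apply Rabs_triang|].
  pose proof (RInt_tail_le M (- a) (- a') hM ltac:(lra)).
  pose proof (RInt_tail_le M b' b hM ltac:(lra)).
  replace (2 * B / M) with (B / M + B / M) by (field; lra). lra.
Qed.

(* The integrals over [-(m+1), m+1] form a Cauchy sequence; its limit is the improper integral. *)
Lemma ex_is_RInt_R_dom : exists I, is_RInt_R f I.
Proof.
  pose proof dom_bound_nonneg as HB.
  set (s := fun m : nat => RInt f (- (INR m + 1)) (INR m + 1)).
  assert (Hc : Cauchy_crit s).
  { intros eps He. destruct (INR_unbounded (2 * B / eps)) as [N HN].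
    exists N. intros p q Hp Hq. unfold R_dist, s.
    assert (INR N <= INR p) by (apply le_INR; lia).
    assert (INR N <= INR q) by (apply le_INR; lia).
    pose proof (pos_INR N).
    eapply Rle_lt_trans; [apply (RInt_tails_dist_le (INR N + 1)); lra|].
    apply div_lt_of_div_lt; lra. }
  destruct (Rcomplete.R_complete s Hc) as [L HL].
  exists L. intros eps He.
  destruct (INR_unbounded (4 * B / eps)) as [N0 HN0].
  exists (INR N0 + 1). intros a b Ha Hb.
  destruct (HL (eps / 2)) as [N1 HN1]; [lra|].
  set (m := max N0 N1). assert (INR N0 <= INR m) by (apply le_INR; lia).
  specialize (HN1 m ltac:(lia)). unfold R_dist in HN1.
  pose proof (pos_INR N0).
  assert (Hd : Rabs (RInt f (- a) b - s m) <= 2 * B / (INR N0 + 1))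
    by (unfold s; apply RInt_tails_dist_le; lra).
  assert (2 * B / (INR N0 + 1) < eps / 2).
  { apply div_lt_of_div_lt; try lra.
    replace (2 * B / (eps / 2)) with (4 * B / eps) by (field; lra). lra. }
  replace (RInt f (- a) b - L) with ((RInt f (- a) b - s m) + (s m - L)) by ring.
  eapply Rle_lt_trans; [apply Rabs_triang | lra].
Qed.

Lemma is_cRInt_R_dom : is_cRInt_R f (RInt_R f).
Proof.
  split; auto. unfold RInt_R. apply epsilon_spec. apply ex_is_RInt_R_dom.
Qed.
End Dominated.

Lemma is_RInt_R_derive_vanishing F f I : (forall x, is_derive F x (f x)) -> continuous_R f ->
  (forall eps, 0 < eps -> exists M, forall x, M <= Rabs x -> Rabs (F x) < eps) ->
  is_RInt_R f I -> I = 0.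
Proof.
  intros HF cf Hlim HI. apply Rabs_eq_0. apply Rle_antisym; [|apply Rabs_pos].
  apply Rnot_lt_le; intros Hp.
  destruct (HI (Rabs I / 3)) as [M1 H1]; [lra|]. destruct (Hlim (Rabs I / 3)) as [M2 H2]; [lra|].
  pose proof (Rmax_l M1 M2). pose proof (Rmax_r M1 M2). set (M := Rmax M1 M2) in *.
  specialize (H1 M M ltac:(lra) ltac:(lra)).
  assert (E : RInt f (- M) M = F M - F (- M)).
  { apply is_RInt_unique. apply (is_RInt_derive (V := R_CompleteNormedModule) F f); intros; auto. }
  rewrite E in H1.
  assert (Rabs (F M) < Rabs I / 3) by (apply H2; pose proof (Rle_abs M); lra).
  assert (Rabs (F (- M)) < Rabs I / 3)
    by (apply H2; rewrite Rabs_Ropp; pose proof (Rle_abs M); lra).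
  pose proof (Rabs_triang (F M - F (- M) - I) (- (F M) + F (- M))) as T.
  replace (F M - F (- M) - I + (- F M + F (- M))) with (- I) in T by ring.
  rewrite Rabs_Ropp in T. pose proof (Rabs_triang (- F M) (F (- M))). rewrite Rabs_Ropp in *. lra.
Qed.

Lemma is_RInt_R_pos f I m : continuous_R f -> (forall x, 0 <= f x) ->
  (forall x, -1 <= x <= 1 -> m <= f x) -> 0 < m -> is_RInt_R f I -> 0 < I.
Proof.
  intros cf Hp Hm hm HI. destruct (HI m hm) as [M HM].
  set (M' := Rmax M 1). specialize (HM M' M' (Rmax_l _ _) (Rmax_l _ _)).
  assert (h1 : 1 <= M') by apply Rmax_r.
  rewrite <- (RInt_Chasles (V := R_CompleteNormedModule) f (- M') (-1) M') in HM
    by (apply ex_RInt_continuous_R; auto).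
  rewrite <- (RInt_Chasles (V := R_CompleteNormedModule) f (-1) 1 M') in HM
    by (apply ex_RInt_continuous_R; auto).
  unfold plus in HM; simpl in HM.
  assert (0 <= RInt f (- M') (-1))
    by (apply RInt_ge_0; [lra | apply ex_RInt_continuous_R; auto | intros; auto]).
  assert (0 <= RInt f 1 M')
    by (apply RInt_ge_0; [lra | apply ex_RInt_continuous_R; auto | intros; auto]).
  assert (RInt (fun _ => m) (-1) 1 <= RInt f (-1) 1).
  { apply RInt_le; [lra | apply ex_RInt_continuous_R .. | intros; apply Hm; lra].
    apply continuous_R_const. auto. }
  rewrite RInt_const in H1. unfold scal in H1; simpl in H1; unfold mult in H1; simpl in H1.
  apply Rabs_def2 in HM. lra.
Qed.

Definition is_cRInt_R2 (F : R -> R -> R) (I : R) : Prop :=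
  exists G, (forall y1, is_cRInt_R (F y1) (G y1)) /\ is_cRInt_R G I.

Lemma is_cRInt_R2_is_int_R2 F I : is_cRInt_R2 F I -> is_int_R2 F I.
Proof.
  intros [G [H1 H2]]. exists G.
  split; [intros; apply is_cRInt_R_is_int_R; auto | apply is_cRInt_R_is_int_R; auto].
Qed.

Lemma is_cRInt_R2_ext F F' I :
  (forall y1 y2, F y1 y2 = F' y1 y2) -> is_cRInt_R2 F I -> is_cRInt_R2 F' I.
Proof.
  intros E [G [H1 H2]]. exists G. split; auto. intros y1. eapply is_cRInt_R_ext; [|apply H1]. auto.
Qed.

Lemma is_cRInt_R2_prod p q P Q :
  is_cRInt_R p P -> is_cRInt_R q Q -> is_cRInt_R2 (fun y1 y2 => p y1 * q y2) (P * Q).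
Proof.
  intros Hp Hq. exists (fun y1 => p y1 * Q). split.
  - intros y1. apply is_cRInt_R_scal; auto.
  - eapply is_cRInt_R_ext; [|rewrite Rmult_comm; apply (is_cRInt_R_scal Q p P Hp)].
    intros; simpl; ring.
Qed.

Lemma is_cRInt_R2_plus F H I J :
  is_cRInt_R2 F I -> is_cRInt_R2 H J -> is_cRInt_R2 (fun y1 y2 => F y1 y2 + H y1 y2) (I + J).
Proof.
  intros [G1 [A1 B1]] [G2 [A2 B2]]. exists (fun y1 => G1 y1 + G2 y1).
  split; [intros y1|]; apply is_cRInt_R_plus; auto.
Qed.

Lemma is_cRInt_R2_scal c F I : is_cRInt_R2 F I -> is_cRInt_R2 (fun y1 y2 => c * F y1 y2) (c * I).
Proof.
  intros [G1 [A1 B1]]. exists (fun y1 => c * G1 y1).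
  split; [intros y1|]; apply is_cRInt_R_scal; auto.
Qed.

Lemma is_cRInt_R2_sub F G I J :
  is_cRInt_R2 F I -> is_cRInt_R2 G J -> is_cRInt_R2 (fun y1 y2 => F y1 y2 - G y1 y2) (I - J).
Proof.
  intros HF HG. replace (I - J) with (I + -1 * J) by ring.
  eapply is_cRInt_R2_ext; [|apply (is_cRInt_R2_plus _ _ _ _ HF (is_cRInt_R2_scal (-1) _ _ HG))].
  intros; simpl; ring.
Qed.

Lemma is_cRInt_R2_rsum n (F : nat -> R -> R -> R) (I : nat -> R) :
  (forall t, (t < n)%nat -> is_cRInt_R2 (F t) (I t)) ->
  is_cRInt_R2 (fun y1 y2 => rsum n (fun t => F t y1 y2)) (rsum n I).
Proof.
  induction n; intros H; simpl.
  - exists (fun _ => 0). split; [intros|]; apply is_cRInt_R_const0.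
  - apply (is_cRInt_R2_plus (fun y1 y2 => rsum n (fun t => F t y1 y2)) (F n)).
    + apply IHn; intros; apply H; lia.
    + apply H; lia.
Qed.

Lemma is_cRInt_R2_rsum4 n F I :
  (forall k k' j j', (k < n)%nat -> (k' < n)%nat -> (j < n)%nat -> (j' < n)%nat ->
     is_cRInt_R2 (F k k' j j') (I k k' j j')) ->
  is_cRInt_R2 (fun y1 y2 => rsum4 n (fun k k' j j' => F k k' j j' y1 y2)) (rsum4 n I).
Proof.
  intros H. unfold rsum4.
  apply (is_cRInt_R2_rsum n (fun k y1 y2 =>
    rsum n (fun k' => rsum n (fun j => rsum n (fun j' => F k k' j j' y1 y2))))); intros.
  apply (is_cRInt_R2_rsum n (fun k' y1 y2 => rsum n (fun j => rsum n (fun j' => F t k' j j' y1 y2))));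
    intros.
  apply (is_cRInt_R2_rsum n (fun j y1 y2 => rsum n (fun j' => F t t0 j j' y1 y2))); intros.
  apply (is_cRInt_R2_rsum n (fun j' y1 y2 => F t t0 t1 j' y1 y2)); intros.
  auto.
Qed.

Definition interference (D E : R) (cu su cv sv : R -> R) (y1 y2 : R) : R :=
  D * (cu y1 * cv y2 - su y1 * sv y2) + E * (su y1 * cv y2 + cu y1 * sv y2).

Lemma is_cRInt_R2_interference D E cu su cv sv ICu ISu ICv ISv :
  is_cRInt_R cu ICu -> is_cRInt_R su ISu -> is_cRInt_R cv ICv -> is_cRInt_R sv ISv ->
  is_cRInt_R2 (interference D E cu su cv sv) (D * (ICu * ICv - ISu * ISv) + E * (ISu * ICv + ICu * ISv)).
Proof.
  intros Hcu Hsu Hcv Hsv.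
  apply is_cRInt_R2_plus; apply is_cRInt_R2_scal;
    [apply is_cRInt_R2_sub | apply is_cRInt_R2_plus]; apply is_cRInt_R2_prod; auto.
Qed.

(** * Elementary bounds *)

Lemma le_of_derive_nonneg h h' : (forall x, is_derive h x (h' x)) -> continuous_R h' ->
  (forall x, 0 <= x -> 0 <= h' x) -> forall t, 0 <= t -> h 0 <= h t.
Proof.
  intros Hd Hc Hp t ht.
  assert (E : RInt h' 0 t = h t - h 0)
    by (apply is_RInt_unique, (is_RInt_derive (V := R_CompleteNormedModule) h h'); intros; auto).
  assert (0 <= RInt h' 0 t)
    by (apply RInt_ge_0; [auto | apply ex_RInt_continuous_R; auto | intros; apply Hp; lra]).
  lra.
Qed.

Lemma sin_le_id t : 0 <= t -> sin t <= t.
Proof.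
  intros ht.
  assert (D : forall x, is_derive (fun t => t - sin t) x ((fun t => 1 - cos t) x))
    by (intros x; auto_derive; [auto | ring]).
  assert (C : continuous_R (fun t => 1 - cos t))
    by (apply continuous_R_derive; intros x; auto_derive; auto).
  pose proof (le_of_derive_nonneg _ _ D C (fun x _ => ltac:(pose proof (COS_bound x); lra)) t ht).
  simpl in *. rewrite sin_0 in *. lra.
Qed.

Lemma cos_ge_1_sub_sq t : 1 - t * t / 2 <= cos t.
Proof.
  assert (K : forall t, 0 <= t -> 1 - t * t / 2 <= cos t).
  { intros s hs.
    assert (D : forall x, is_derive (fun t => cos t - 1 + t * t / 2) x ((fun t => - sin t + t) x))
      by (intros x; auto_derive; [auto | field]).
    assert (C : continuous_R (fun t => - sin t + t))
      by (apply continuous_R_derive; intros x; auto_derive; auto).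
    pose proof (le_of_derive_nonneg _ _ D C (fun x hx => ltac:(pose proof (sin_le_id x hx); lra)) s hs).
    simpl in *. rewrite cos_0 in *. lra. }
  destruct (Rle_dec 0 t); [apply K; auto|].
  rewrite <- cos_neg. replace (t * t) with (- t * - t) by ring. apply K; lra.
Qed.

Lemma Rabs_cos_sub_1_le t : Rabs (cos t - 1) <= t * t / 2.
Proof. pose proof (cos_ge_1_sub_sq t). pose proof (COS_bound t). apply Rabs_le. lra. Qed.

Lemma Rabs_sin_sub_id_le t : Rabs (sin t - t) <= Rabs t * Rabs t * Rabs t / 6.
Proof.
  assert (K : forall t, 0 <= t -> Rabs (sin t - t) <= t * t * t / 6).
  { intros s hs.
    assert (D : forall x, is_derive (fun t => sin t - t + t * t * t / 6) x
                                    ((fun t => cos t - 1 + t * t / 2) x))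
      by (intros x; auto_derive; [auto | field]).
    assert (C : continuous_R (fun t => cos t - 1 + t * t / 2))
      by (apply continuous_R_derive; intros x; auto_derive; auto).
    pose proof (le_of_derive_nonneg _ _ D C
                  (fun x _ => ltac:(pose proof (cos_ge_1_sub_sq x); lra)) s hs).
    simpl in *. rewrite sin_0 in *.
    pose proof (sin_le_id s hs). assert (0 <= s * s * s) by (apply Rmult_le_pos; nra).
    apply Rabs_le. lra. }
  destruct (Rle_dec 0 t).
  - rewrite (Rabs_right t) by lra. apply K; auto.
  - rewrite (Rabs_left t) by lra.
    replace (sin t - t) with (- (sin (- t) - (- t))) by (rewrite sin_neg; ring).
    rewrite Rabs_Ropp. apply K; lra.
Qed.

Lemma Rabs_mul_self x : Rabs x * Rabs x = x * x.
Proof. rewrite <- Rabs_mult. apply Rabs_pos_eq, Rle_0_sqr. Qed.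

Lemma exp_le_mono x y : x <= y -> exp x <= exp y.
Proof. intros [H|H]; [left; apply exp_increasing; auto | subst; lra]. Qed.

Lemma exp_ge_id t : t <= exp t.
Proof. pose proof (exp_ineq1_le t). lra. Qed.

Lemma exp_ge_sq t : 0 <= t -> t * t / 4 <= exp t.
Proof.
  intros ht. replace (exp t) with (exp (t / 2) * exp (t / 2)) by (rewrite <- exp_plus; f_equal; field).
  pose proof (exp_ge_id (t / 2)).
  replace (t * t / 4) with ((t / 2) * (t / 2)) by field. apply Rmult_le_compat; lra.
Qed.

Lemma exp_ge_cube t : 0 <= t -> t * t * t / 27 <= exp t.
Proof.
  intros ht.
  replace (exp t) with (exp (t / 3) * exp (t / 3) * exp (t / 3)) by (rewrite <- !exp_plus; f_equal; field).
  pose proof (exp_ge_id (t / 3)).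
  replace (t * t * t / 27) with ((t / 3) * (t / 3) * (t / 3)) by field.
  apply Rmult_le_compat; try lra; [apply Rmult_le_pos; lra | apply Rmult_le_compat; lra].
Qed.

Definition gauss_dom_const A c := A * (1 + 1 / c + 4 / (c * c) + 27 / (c * c * c)).

Lemma gauss_dom_const_nonneg A c : 0 < c -> 0 <= A -> 0 <= gauss_dom_const A c.
Proof.
  intros hc hA. unfold gauss_dom_const. apply Rmult_le_pos; auto.
  assert (0 < c * c) by nra. assert (0 < c * c * c) by nra.
  pose proof (Rdiv_le_0_compat 1 c ltac:(lra) hc).
  pose proof (Rdiv_le_0_compat 4 (c * c) ltac:(lra) H).
  pose proof (Rdiv_le_0_compat 27 (c * c * c) ltac:(lra) H0). lra.
Qed.

(* With [y = x^2]: [(1 + y)(1 + y^2) = 1 + y + y^2 + y^3] and [y^k <= (k/c)^k e^{c y}] for [k <= 3]. *)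
Lemma quartic_gauss_le A c x : 0 < c -> 0 <= A ->
  A * (1 + x * x * (x * x)) * exp (- (c * (x * x))) <= gauss_dom_const A c / (1 + x * x).
Proof.
  intros hc hA. set (y := x * x). assert (hy : 0 <= y) by (unfold y; nra).
  set (t := c * y). assert (ht : 0 <= t) by (unfold t; nra).
  pose proof (exp_pos t) as he.
  pose proof (exp_ineq1_le t). pose proof (exp_ge_id t).
  pose proof (exp_ge_sq t ht). pose proof (exp_ge_cube t ht).
  set (e := exp t) in *. rewrite exp_Ropp. fold e.
  assert (0 < c * c) by nra.
  assert (y <= e / c)
    by (apply (proj1 (Rle_div_r y e c hc)); unfold t in *; rewrite Rmult_comm; lra).
  assert (y * y <= 4 * e / (c * c)).
  { apply (proj1 (Rle_div_r (y * y) (4 * e) (c * c) ltac:(nra))).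
    replace (y * y * (c * c)) with (t * t) by (unfold t; ring). lra. }
  assert (y * y * y <= 27 * e / (c * c * c)).
  { apply (proj1 (Rle_div_r (y * y * y) (27 * e) (c * c * c) ltac:(nra))).
    replace (y * y * y * (c * c * c)) with (t * t * t) by (unfold t; ring). lra. }
  unfold gauss_dom_const. apply (proj1 (Rle_div_r _ _ (1 + y) ltac:(lra))).
  replace (A * (1 + y * y) * / e * (1 + y)) with (A * (1 + y + y * y + y * y * y) / e) by (field; lra).
  apply (proj2 (Rle_div_l _ _ _ he)).
  replace (A * (1 + 1 / c + 4 / (c * c) + 27 / (c * c * c)) * e)
    with (A * (e + e / c + 4 * e / (c * c) + 27 * e / (c * c * c))) by (field; lra).
  apply Rmult_le_compat_l; lra.
Qed.

Lemma is_cRInt_R_gauss f A c : continuous_R f -> 0 < c -> 0 <= A ->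
  (forall x, Rabs (f x) <= A * (1 + x * x * (x * x)) * exp (- (c * (x * x)))) ->
  is_cRInt_R f (RInt_R f).
Proof.
  intros cf hc hA H. apply (is_cRInt_R_dom f (gauss_dom_const A c)); auto.
  intros x. eapply Rle_trans; [apply H | apply quartic_gauss_le; auto].
Qed.

Lemma gauss_vanishing F A c : 0 < c -> 0 <= A ->
  (forall x, Rabs (F x) <= A * (1 + x * x * (x * x)) * exp (- (c * (x * x)))) ->
  forall eps, 0 < eps -> exists M, forall x, M <= Rabs x -> Rabs (F x) < eps.
Proof.
  intros hc hA H eps he. set (B := gauss_dom_const A c).
  pose proof (gauss_dom_const_nonneg A c hc hA) as hB. fold B in hB.
  exists (B / eps + 1). intros x hx.
  eapply Rle_lt_trans; [apply H|]. eapply Rle_lt_trans; [apply quartic_gauss_le; auto|]. fold B.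
  assert (0 <= B / eps) by (apply Rdiv_le_0_compat; lra).
  pose proof (Rabs_mul_self x) as E.
  assert (Rabs x <= x * x) by nra.
  apply div_lt_of_div_lt; lra.
Qed.

Lemma Rabs_le_quartic x : Rabs x <= 1 + x * x * (x * x).
Proof.
  pose proof (Rabs_mul_self x) as E.
  pose proof (Rabs_pos x). destruct (Rle_dec (Rabs x) 1); [nra|].
  assert (Rabs x <= x * x) by nra. nra.
Qed.

Lemma Rabs_le_1_quartic k t : Rabs t <= 1 -> Rabs t <= 1 + k * k * (k * k).
Proof. intros. assert (0 <= k * k * (k * k)) by nra. lra. Qed.

Lemma Rabs_mul_le_1_quartic k t : Rabs t <= 1 -> Rabs (k * t) <= 1 + k * k * (k * k).
Proof.
  intros Ht. pose proof (Rabs_le_quartic k). pose proof (Rabs_pos k). pose proof (Rabs_pos t).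
  rewrite Rabs_mult. nra.
Qed.

Lemma Rabs_cos_le_1 t : Rabs (cos t) <= 1.
Proof. pose proof (COS_bound t). apply Rabs_le; lra. Qed.

Lemma Rabs_sin_le_1 t : Rabs (sin t) <= 1.
Proof. pose proof (SIN_bound t). apply Rabs_le; lra. Qed.

Section PositionMeter.
Variable sigma : R.
Hypothesis hs : 0 < sigma.

Definition phi_const : R := Rpower (2 * PI * sigma ^ 2) (- / 4).
Definition phi_overlap (d : R) : R := exp (- (d * d) / (8 * sigma ^ 2)).
Definition gauss_x (y : R) : R := exp (- (1 / (2 * sigma ^ 2) * (y * y))).
Definition gauss_x_mass : R := RInt_R gauss_x.

Lemma gauss_x_rate_pos : 0 < 1 / (2 * sigma ^ 2).
Proof. apply Rdiv_lt_0_compat; nra. Qed.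

Lemma is_cRInt_R_gauss_x : is_cRInt_R gauss_x gauss_x_mass.
Proof.
  apply (is_cRInt_R_gauss gauss_x 1 (1 / (2 * sigma ^ 2))); [|apply gauss_x_rate_pos | lra|].
  - apply continuous_R_derive. intros x. unfold gauss_x. auto_derive. auto.
  - intros x. unfold gauss_x. rewrite Rabs_right by (left; apply exp_pos).
    pose proof (exp_pos (- (1 / (2 * sigma ^ 2) * (x * x)))).
    assert (0 <= x * x * (x * x)) by nra. nra.
Qed.

Lemma gauss_x_mass_pos : 0 < gauss_x_mass.
Proof.
  destruct is_cRInt_R_gauss_x as [cg HI].
  apply (is_RInt_R_pos gauss_x gauss_x_mass (exp (- (1 / (2 * sigma ^ 2))))); auto.
  - intros; left; apply exp_pos.
  - intros x Hx. unfold gauss_x. apply exp_le_mono, Ropp_le_contravar.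
    pose proof gauss_x_rate_pos. rewrite <- (Rmult_1_r (1 / (2 * sigma ^ 2))) at 2.
    apply Rmult_le_compat_l; nra.
  - apply exp_pos.
Qed.

(* Completing the square in the product of two displaced meter wave functions. *)
Lemma phi_mul_phi x al be : phi sigma (x - al) * phi sigma (x - be) =
  phi_const * phi_const * phi_overlap (al - be) * gauss_x (x - (al + be) / 2).
Proof.
  unfold phi, gauss_x, phi_const, phi_overlap.
  assert (E : exp (- (x - al) ^ 2 / (4 * sigma ^ 2)) * exp (- (x - be) ^ 2 / (4 * sigma ^ 2)) =
    exp (- ((al - be) * (al - be)) / (8 * sigma ^ 2)) *
    exp (- (1 / (2 * sigma ^ 2) * ((x - (al + be) / 2) * (x - (al + be) / 2)))))
    by (rewrite <- !exp_plus; f_equal; field; lra).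
  set (c := Rpower (2 * PI * sigma ^ 2) (- / 4)).
  transitivity (c * c * (exp (- (x - al) ^ 2 / (4 * sigma ^ 2)) * exp (- (x - be) ^ 2 / (4 * sigma ^ 2))));
    [ring | rewrite E; ring].
Qed.

Lemma is_cRInt_R_id_gauss_x : is_cRInt_R (fun y => y * gauss_x y) 0.
Proof.
  assert (H : is_cRInt_R (fun y => y * gauss_x y) (RInt_R (fun y => y * gauss_x y))).
  { apply (is_cRInt_R_gauss _ 1 (1 / (2 * sigma ^ 2))); [| apply gauss_x_rate_pos | lra |].
    - apply continuous_R_mult; [intros x; apply continuous_id | apply is_cRInt_R_gauss_x].
    - intros x. unfold gauss_x. rewrite Rabs_mult, (Rabs_right (exp _)) by (left; apply exp_pos).
      pose proof (exp_pos (- (1 / (2 * sigma ^ 2) * (x * x)))). pose proof (Rabs_le_quartic x).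
      rewrite Rmult_1_l. apply Rmult_le_compat_r; lra. }
  destruct H as [c1 H]. split; auto.
  rewrite (is_RInt_R_odd _ _ c1) in H; auto.
  intros x. unfold gauss_x. replace (- x * - x) with (x * x) by ring. ring.
Qed.

Lemma is_cRInt_R_phi_mul_phi al be :
  is_cRInt_R (fun x => phi sigma (x - al) * phi sigma (x - be))
             (phi_const * phi_const * phi_overlap (al - be) * gauss_x_mass).
Proof.
  eapply is_cRInt_R_ext; [intros x; symmetry; apply phi_mul_phi|].
  apply is_cRInt_R_scal, is_cRInt_R_shift, is_cRInt_R_gauss_x.
Qed.

Lemma is_cRInt_R_id_phi_mul_phi al be :
  is_cRInt_R (fun x => x * (phi sigma (x - al) * phi sigma (x - be)))
             (phi_const * phi_const * phi_overlap (al - be) * ((al + be) / 2 * gauss_x_mass)).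
Proof.
  set (m := (al + be) / 2).
  assert (H : is_cRInt_R (fun y => y * gauss_x y + m * gauss_x y) (0 + m * gauss_x_mass))
    by (apply is_cRInt_R_plus; [apply is_cRInt_R_id_gauss_x | apply is_cRInt_R_scal, is_cRInt_R_gauss_x]).
  rewrite Rplus_0_l in H. apply (is_cRInt_R_shift _ _ m) in H.
  eapply is_cRInt_R_ext; [|apply (is_cRInt_R_scal (phi_const * phi_const * phi_overlap (al - be))); exact H].
  intros x. simpl. rewrite phi_mul_phi. fold m. ring.
Qed.

Lemma Rabs_phi_overlap_mul_sub_1_le x y :
  Rabs (phi_overlap x * phi_overlap y - 1) <= (x * x + y * y) / (8 * sigma ^ 2).
Proof.
  unfold phi_overlap. rewrite <- exp_plus.
  replace (- (x * x) / (8 * sigma ^ 2) + - (y * y) / (8 * sigma ^ 2))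
    with (- ((x * x + y * y) / (8 * sigma ^ 2))) by (field; lra).
  assert (0 <= (x * x + y * y) / (8 * sigma ^ 2)) by (apply Rdiv_le_0_compat; nra).
  pose proof (exp_ineq1_le (- ((x * x + y * y) / (8 * sigma ^ 2)))).
  assert (exp (- ((x * x + y * y) / (8 * sigma ^ 2))) <= 1) by (rewrite <- exp_0; apply exp_le_mono; lra).
  rewrite Rabs_left1 by lra. lra.
Qed.
End PositionMeter.

Section MomentumMeter.
Variable sigma : R.
Hypothesis hs : 0 < sigma.

Definition phit_const : R := Rpower (2 * sigma ^ 2 / PI) (/ 4).
Definition phit_sq (k : R) : R := phit sigma k * phit sigma k.
Definition phit_sq_mass : R := RInt_R phit_sq.
Definition phit_sq_mom2 : R := RInt_R (fun k => k * k * phit_sq k).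
Definition phit_sq_mom4 : R := RInt_R (fun k => k * k * (k * k) * phit_sq k).
Definition phit_sq_cos (g : R) : R := RInt_R (fun k => phit_sq k * cos (g * k)).
Definition phit_sq_ksin (g : R) : R := RInt_R (fun k => k * phit_sq k * sin (g * k)).

Lemma phit_sq_rate_pos : 0 < 2 * sigma ^ 2.
Proof. nra. Qed.

Lemma phit_const_pos : 0 < phit_const.
Proof. apply exp_pos. Qed.

Lemma phit_sq_eq k : phit_sq k = phit_const * phit_const * exp (- (2 * sigma ^ 2 * (k * k))).
Proof.
  unfold phit_sq, phit, phit_const.
  transitivity (Rpower (2 * sigma ^ 2 / PI) (/ 4) * Rpower (2 * sigma ^ 2 / PI) (/ 4) *
                (exp (- k ^ 2 * sigma ^ 2) * exp (- k ^ 2 * sigma ^ 2))); [ring|].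
  rewrite <- exp_plus. do 2 f_equal. ring.
Qed.

Lemma phit_sq_pos k : 0 < phit_sq k.
Proof.
  rewrite phit_sq_eq. pose proof phit_const_pos.
  apply Rmult_lt_0_compat; [nra | apply exp_pos].
Qed.

Lemma phit_sq_even k : phit_sq (- k) = phit_sq k.
Proof. rewrite !phit_sq_eq. replace (- k * - k) with (k * k) by ring. reflexivity. Qed.

Lemma continuous_R_phit_sq : continuous_R phit_sq.
Proof. apply continuous_R_derive. intros x. unfold phit_sq, phit. auto_derive. auto. Qed.

Lemma is_cRInt_R_phit_sq_mul f t : continuous_R f -> (forall k, f k = phit_sq k * t k) ->
  (forall k, Rabs (t k) <= 1 + k * k * (k * k)) -> is_cRInt_R f (RInt_R f).
Proof.
  intros cf Ef Ht. apply (is_cRInt_R_gauss f (phit_const * phit_const) (2 * sigma ^ 2)); auto.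
  - apply phit_sq_rate_pos.
  - apply Rle_0_sqr.
  - intros k. rewrite Ef, Rabs_mult, (Rabs_right (phit_sq k)) by (left; apply phit_sq_pos).
    rewrite phit_sq_eq. pose proof (Ht k). pose proof (Rabs_pos (t k)). pose proof phit_const_pos.
    pose proof (exp_pos (- (2 * sigma ^ 2 * (k * k)))).
    assert (0 < phit_const * phit_const * exp (- (2 * sigma ^ 2 * (k * k)))) by (apply Rmult_lt_0_compat; nra).
    nra.
Qed.

Lemma is_cRInt_R_phit_sq_mul_odd f t : continuous_R f -> (forall k, f k = phit_sq k * t k) ->
  (forall k, Rabs (t k) <= 1 + k * k * (k * k)) -> (forall k, f (- k) = - f k) -> is_cRInt_R f 0.
Proof.
  intros cf Ef Ht Ho. destruct (is_cRInt_R_phit_sq_mul f t cf Ef Ht) as [_ HI]. split; auto.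
  rewrite (is_RInt_R_odd f _ cf Ho HI) in HI. auto.
Qed.

Lemma is_cRInt_R_phit_sq : is_cRInt_R phit_sq phit_sq_mass.
Proof.
  apply (is_cRInt_R_phit_sq_mul _ (fun _ => 1)); [apply continuous_R_phit_sq | intros; ring |].
  intros k. apply Rabs_le_1_quartic. cbv beta. rewrite Rabs_R1. lra.
Qed.

Lemma is_cRInt_R_phit_sq_mom2 : is_cRInt_R (fun k => k * k * phit_sq k) phit_sq_mom2.
Proof.
  apply (is_cRInt_R_phit_sq_mul _ (fun k => k * k)); [| intros; ring |].
  - apply continuous_R_mult; [apply continuous_R_mult|]; auto using continuous_R_id, continuous_R_phit_sq.
  - intros k. cbv beta. rewrite Rabs_right by nra. nra.
Qed.

Lemma is_cRInt_R_phit_sq_mom4 : is_cRInt_R (fun k => k * k * (k * k) * phit_sq k) phit_sq_mom4.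
Proof.
  apply (is_cRInt_R_phit_sq_mul _ (fun k => k * k * (k * k))); [| intros; ring |].
  - apply continuous_R_mult; [repeat apply continuous_R_mult; apply continuous_R_id | apply continuous_R_phit_sq].
  - intros k. cbv beta. rewrite Rabs_right by nra. lra.
Qed.

Lemma is_cRInt_R_phit_sq_cos g : is_cRInt_R (fun k => phit_sq k * cos (g * k)) (phit_sq_cos g).
Proof.
  apply (is_cRInt_R_phit_sq_mul _ (fun k => cos (g * k))); [| reflexivity |].
  - apply continuous_R_mult; auto using continuous_R_phit_sq, continuous_R_cos_mul.
  - intros k. apply Rabs_le_1_quartic, Rabs_cos_le_1.
Qed.

Lemma is_cRInt_R_phit_sq_ksin g : is_cRInt_R (fun k => k * phit_sq k * sin (g * k)) (phit_sq_ksin g).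
Proof.
  apply (is_cRInt_R_phit_sq_mul _ (fun k => k * sin (g * k))); [| intros; ring |].
  - apply continuous_R_mult; [apply continuous_R_mult|]; auto using continuous_R_id, continuous_R_phit_sq, continuous_R_sin_mul.
  - intros k. apply Rabs_mul_le_1_quartic, Rabs_sin_le_1.
Qed.

Lemma is_cRInt_R_phit_sq_sin g : is_cRInt_R (fun k => phit_sq k * sin (g * k)) 0.
Proof.
  apply (is_cRInt_R_phit_sq_mul_odd _ (fun k => sin (g * k))); [| reflexivity | |].
  - apply continuous_R_mult; auto using continuous_R_phit_sq, continuous_R_sin_mul.
  - intros k. apply Rabs_le_1_quartic, Rabs_sin_le_1.
  - intros k. rewrite phit_sq_even. replace (g * - k) with (- (g * k)) by ring. rewrite sin_neg. ring.
Qed.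

Lemma is_cRInt_R_phit_sq_kcos g : is_cRInt_R (fun k => k * phit_sq k * cos (g * k)) 0.
Proof.
  apply (is_cRInt_R_phit_sq_mul_odd _ (fun k => k * cos (g * k))); [| intros; ring | |].
  - apply continuous_R_mult; [apply continuous_R_mult|]; auto using continuous_R_id, continuous_R_phit_sq, continuous_R_cos_mul.
  - intros k. apply Rabs_mul_le_1_quartic, Rabs_cos_le_1.
  - intros k. rewrite phit_sq_even. replace (g * - k) with (- (g * k)) by ring. rewrite cos_neg. ring.
Qed.

Lemma phit_sq_mass_pos : 0 < phit_sq_mass.
Proof.
  destruct is_cRInt_R_phit_sq as [c1 HI]. pose proof phit_const_pos.
  apply (is_RInt_R_pos phit_sq phit_sq_mass (phit_const * phit_const * exp (- (2 * sigma ^ 2)))); auto.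
  - intros; left; apply phit_sq_pos.
  - intros x Hx. rewrite phit_sq_eq. apply Rmult_le_compat_l; [nra|].
    apply exp_le_mono, Ropp_le_contravar. pose proof phit_sq_rate_pos.
    rewrite <- (Rmult_1_r (2 * sigma ^ 2)) at 2. apply Rmult_le_compat_l; nra.
  - apply Rmult_lt_0_compat; [nra | apply exp_pos].
Qed.

Lemma phit_sq_mom2_nonneg : 0 <= phit_sq_mom2.
Proof.
  apply (is_cRInt_R_nonneg _ _ is_cRInt_R_phit_sq_mom2).
  intros k. pose proof (phit_sq_pos k). apply Rmult_le_pos; [nra | lra].
Qed.

Lemma phit_sq_mom4_nonneg : 0 <= phit_sq_mom4.
Proof.
  apply (is_cRInt_R_nonneg _ _ is_cRInt_R_phit_sq_mom4).
  intros k. pose proof (phit_sq_pos k). apply Rmult_le_pos; [nra | lra].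
Qed.

(* Integration by parts: [(k phit_sq k)' = phit_sq k - 4 sigma^2 k^2 phit_sq k]. *)
Lemma phit_sq_mom2_eq : phit_sq_mom2 = phit_sq_mass / (4 * sigma ^ 2).
Proof.
  destruct (is_cRInt_R_sub _ _ _ _ is_cRInt_R_phit_sq
              (is_cRInt_R_scal (4 * sigma ^ 2) _ _ is_cRInt_R_phit_sq_mom2)) as [cf HI].
  assert (E : phit_sq_mass - 4 * sigma ^ 2 * phit_sq_mom2 = 0).
  { apply (is_RInt_R_derive_vanishing (fun k => k * phit_sq k)
             (fun k => phit_sq k - 4 * sigma ^ 2 * (k * k * phit_sq k))); auto.
    - intros x.
      assert (Ef : forall t : R,
                phit_const * phit_const * (t * exp (- (2 * sigma ^ 2 * (t * t)))) = t * phit_sq t)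
        by (intros t; rewrite phit_sq_eq; ring).
      apply (is_derive_ext _ _ x _ Ef). rewrite phit_sq_eq. auto_derive; [auto|].
      replace (sigma * (sigma * 1)) with (sigma ^ 2) by ring. ring.
    - apply (gauss_vanishing _ (phit_const * phit_const) (2 * sigma ^ 2)); [apply phit_sq_rate_pos | apply Rle_0_sqr |].
      intros k. rewrite Rabs_mult, (Rabs_right (phit_sq k)) by (left; apply phit_sq_pos).
      pose proof (Rabs_le_quartic k). rewrite phit_sq_eq. pose proof phit_const_pos.
      pose proof (exp_pos (- (2 * sigma ^ 2 * (k * k)))).
      assert (0 < phit_const * phit_const * exp (- (2 * sigma ^ 2 * (k * k)))) by (apply Rmult_lt_0_compat; nra).
      nra. }
  assert (0 < 4 * sigma ^ 2) by nra.
  apply (Rmult_eq_reg_l (4 * sigma ^ 2)); [field_simplify; lra | lra].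
Qed.

Lemma Rabs_phit_sq_cos_le g : Rabs (phit_sq_cos g) <= phit_sq_mass.
Proof.
  apply (is_cRInt_R_abs_le _ _ _ _ (is_cRInt_R_phit_sq_cos g) is_cRInt_R_phit_sq).
  intros k. pose proof (phit_sq_pos k). pose proof (Rabs_cos_le_1 (g * k)).
  rewrite Rabs_mult, (Rabs_right (phit_sq k)) by lra. nra.
Qed.

Lemma Rabs_phit_sq_cos_sub_mass_le g : Rabs (phit_sq_cos g - phit_sq_mass) <= g * g / 2 * phit_sq_mom2.
Proof.
  apply (is_cRInt_R_abs_le _ _ _ _
           (is_cRInt_R_sub _ _ _ _ (is_cRInt_R_phit_sq_cos g) is_cRInt_R_phit_sq)
           (is_cRInt_R_scal (g * g / 2) _ _ is_cRInt_R_phit_sq_mom2)).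
  intros k. pose proof (phit_sq_pos k). pose proof (Rabs_cos_sub_1_le (g * k)).
  replace (phit_sq k * cos (g * k) - phit_sq k) with (phit_sq k * (cos (g * k) - 1)) by ring.
  rewrite Rabs_mult, (Rabs_right (phit_sq k)) by lra.
  replace (g * g / 2 * (k * k * phit_sq k)) with (phit_sq k * ((g * k) * (g * k) / 2)) by (unfold Rdiv; ring).
  apply Rmult_le_compat_l; lra.
Qed.

Lemma Rabs_phit_sq_ksin_sub_le g :
  Rabs (phit_sq_ksin g - g * phit_sq_mom2) <= Rabs g * Rabs g * Rabs g / 6 * phit_sq_mom4.
Proof.
  apply (is_cRInt_R_abs_le _ _ _ _
           (is_cRInt_R_sub _ _ _ _ (is_cRInt_R_phit_sq_ksin g) (is_cRInt_R_scal g _ _ is_cRInt_R_phit_sq_mom2))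
           (is_cRInt_R_scal (Rabs g * Rabs g * Rabs g / 6) _ _ is_cRInt_R_phit_sq_mom4)).
  intros k. pose proof (phit_sq_pos k). pose proof (Rabs_sin_sub_id_le (g * k)) as H3.
  replace (k * phit_sq k * sin (g * k) - g * (k * k * phit_sq k))
    with ((k * phit_sq k) * (sin (g * k) - g * k)) by ring.
  rewrite Rabs_mult, Rabs_mult, (Rabs_right (phit_sq k)) by lra.
  rewrite Rabs_mult in H3. pose proof (Rabs_mul_self k) as E.
  pose proof (Rabs_pos k). pose proof (Rabs_pos g).
  apply Rle_trans with (Rabs k * phit_sq k * (Rabs g * Rabs k * (Rabs g * Rabs k) * (Rabs g * Rabs k) / 6)).
  - apply Rmult_le_compat_l; [nra | auto].
  - right. rewrite <- E. unfold Rdiv. ring.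
Qed.
Lemma Rabs_phit_sq_ksin_mul_sub_le g d : 0 < g ->
  Rabs (phit_sq_ksin (g * d) - g * (d * phit_sq_mom2)) <= g ^ 3 * (Rabs d * Rabs d * Rabs d / 6 * phit_sq_mom4).
Proof.
  intros hg. pose proof (Rabs_phit_sq_ksin_sub_le (g * d)) as H.
  rewrite Rabs_mult, (Rabs_right g) in H by lra.
  replace (g * (d * phit_sq_mom2)) with (g * d * phit_sq_mom2) by ring.
  eapply Rle_trans; [apply H|]. right. unfold Rdiv. ring.
Qed.
End MomentumMeter.

Definition phit_cos sigma u y : R := phit_sq sigma y * cos (u * y).
Definition phit_sin sigma u y : R := phit_sq sigma y * sin (u * y).

(** * Small-coupling expansion of a normalized mean *)

Lemma Rabs_mul_sub_sq_le x y Z ex ey : Rabs (x - Z) <= ex -> Rabs (y - Z) <= ey -> Rabs y <= Z ->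
  Rabs (x * y - Z * Z) <= ex * Z + Z * ey.
Proof.
  intros h1 h2 h3. assert (0 <= Z) by (pose proof (Rabs_pos y); lra).
  replace (x * y - Z * Z) with ((x - Z) * y + Z * (y - Z)) by ring.
  eapply Rle_trans; [apply Rabs_triang|]. rewrite !Rabs_mult, (Rabs_right Z) by lra.
  pose proof (Rabs_pos (x - Z)). pose proof (Rabs_pos y).
  apply Rplus_le_compat; [apply Rmult_le_compat | apply Rmult_le_compat_l]; auto.
Qed.

Lemma Rabs_mul_sub_approx_le x y a b e f g : 0 <= g <= 1 -> 0 <= e -> 0 <= f ->
  Rabs (x - g * a) <= g ^ 3 * e -> Rabs (y - g * b) <= g ^ 3 * f ->
  Rabs (x * y - g ^ 2 * (a * b)) <= g ^ 4 * (Rabs a * f + e * Rabs b + e * f).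
Proof.
  intros hg he hf h1 h2.
  set (e1 := x - g * a) in *. set (e2 := y - g * b) in *.
  replace (x * y - g ^ 2 * (a * b)) with (g * a * e2 + g * b * e1 + e1 * e2) by (unfold e1, e2; ring).
  assert (g ^ 6 <= g ^ 4).
  { replace (g ^ 6) with (g ^ 4 * (g * g)) by ring. assert (0 <= g ^ 4) by (apply pow_le; lra).
    assert (g * g <= 1) by nra. nra. }
  pose proof (Rabs_pos e1). pose proof (Rabs_pos e2). pose proof (Rabs_pos a). pose proof (Rabs_pos b).
  assert (0 <= g ^ 3) by (apply pow_le; lra).
  eapply Rle_trans; [apply Rabs_triang|]. eapply Rle_trans; [apply Rplus_le_compat_r, Rabs_triang|].
  rewrite !Rabs_mult, (Rabs_right g) by lra.
  assert (g * Rabs a * Rabs e2 <= g ^ 4 * (Rabs a * f)).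
  { replace (g ^ 4 * (Rabs a * f)) with (g * Rabs a * (g ^ 3 * f)) by ring.
    apply Rmult_le_compat_l; [nra | auto]. }
  assert (g * Rabs b * Rabs e1 <= g ^ 4 * (e * Rabs b)).
  { replace (g ^ 4 * (e * Rabs b)) with (g * Rabs b * (g ^ 3 * e)) by ring.
    apply Rmult_le_compat_l; [nra | auto]. }
  assert (Rabs e1 * Rabs e2 <= g ^ 4 * (e * f)).
  { apply Rle_trans with ((g ^ 3 * e) * (g ^ 3 * f)); [apply Rmult_le_compat; auto|].
    replace (g ^ 3 * e * (g ^ 3 * f)) with (g ^ 6 * (e * f)) by ring. apply Rmult_le_compat_r; nra. }
  lra.
Qed.

Lemma ratio_approx N M N0 M0 B g : 0 < N0 -> 0 <= B -> 0 < g <= 1 -> 2 * g * B <= N0 ->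
  Rabs (N - N0) <= g ^ 2 * B -> Rabs (M - g ^ 2 * M0) <= g ^ 4 * B ->
  N <> 0 /\ Rabs (M / N - g ^ 2 * (M0 / N0)) <= 2 * B * (N0 + Rabs M0) / (N0 * N0) * g ^ 3.
Proof.
  intros hN0 hB hg hgB HN HM.
  assert (hg2 : 0 < g ^ 2 <= g) by (simpl; split; nra).
  assert (hN : N0 / 2 <= N) by (apply Rabs_le_between in HN; nra).
  split; [lra|].
  replace (M / N - g ^ 2 * (M0 / N0)) with (((M - g ^ 2 * M0) * N0 - g ^ 2 * M0 * (N - N0)) / (N * N0))
    by (field; lra).
  rewrite Rabs_div by nra. rewrite (Rabs_right (N * N0)) by nra.
  apply (proj2 (Rle_div_l _ _ (N * N0) ltac:(nra))).
  eapply Rle_trans; [apply Rabs_triang|].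
  rewrite Rabs_Ropp, !Rabs_mult, (Rabs_right N0), (Rabs_right (g ^ 2)) by lra.
  pose proof (Rabs_pos M0).
  assert (g ^ 4 = g ^ 2 * g ^ 2) by ring. assert (g ^ 3 = g ^ 2 * g) by ring.
  assert (Rabs (M - g ^ 2 * M0) * N0 <= g ^ 4 * B * N0) by (apply Rmult_le_compat_r; lra).
  assert (g ^ 2 * Rabs M0 * Rabs (N - N0) <= g ^ 2 * Rabs M0 * (g ^ 2 * B))
    by (apply Rmult_le_compat_l; [apply Rmult_le_pos|]; lra).
  apply Rle_trans with (g ^ 4 * (B * (N0 + Rabs M0))); [nra|].
  replace (2 * B * (N0 + Rabs M0) / (N0 * N0) * g ^ 3 * (N * N0))
    with (g ^ 3 * (B * (N0 + Rabs M0)) * (2 * N / N0)) by (field; lra).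
  assert (1 <= 2 * N / N0) by (apply Rle_div_r; lra).
  assert (0 <= B * (N0 + Rabs M0)) by nra.
  assert (g ^ 4 <= g ^ 3) by nra.
  apply Rle_trans with (g ^ 3 * (B * (N0 + Rabs M0))); [apply Rmult_le_compat_r; auto|].
  rewrite <- (Rmult_1_r (g ^ 3 * (B * (N0 + Rabs M0)))) at 1.
  apply Rmult_le_compat_l; [nra | auto].
Qed.

Lemma mean2_small_coupling (P : R -> R -> R -> R) h (N M : R -> R) N0 M0 B :
  0 < N0 -> 0 <= B ->
  (forall g, is_cRInt_R2 (P g) (N g)) ->
  (forall g, is_cRInt_R2 (fun y1 y2 => h y1 y2 * P g y1 y2) (M g)) ->
  (forall g, 0 < g <= 1 -> Rabs (N g - N0) <= g ^ 2 * B /\ Rabs (M g - g ^ 2 * M0) <= g ^ 4 * B) ->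
  exists K delta, 0 <= K /\ 0 < delta /\ forall g, 0 < g < delta ->
    exists m, mean2 (P g) h m /\ Rabs (m - g ^ 2 * (M0 / N0)) <= K * g ^ 3.
Proof.
  intros hN0 hB HN HM Happrox.
  exists (2 * B * (N0 + Rabs M0) / (N0 * N0)), (Rmin 1 (N0 / (2 * B + 1))).
  split; [|split].
  - pose proof (Rabs_pos M0). apply Rdiv_le_0_compat; nra.
  - apply Rmin_glb_lt; [lra | apply Rdiv_lt_0_compat; lra].
  - intros g [hg hgd].
    assert (hg1 : g <= 1) by (pose proof (Rmin_l 1 (N0 / (2 * B + 1))); lra).
    assert (hgB : 2 * g * B <= N0).
    { pose proof (Rmin_r 1 (N0 / (2 * B + 1))).
      assert (g * (2 * B + 1) < N0) by (apply (Rlt_div_r g N0 (2 * B + 1)); lra). nra. }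
    destruct (Happrox g (conj hg hg1)) as [HNg HMg].
    destruct (ratio_approx (N g) (M g) N0 M0 B g) as [hNg Hratio]; auto.
    exists (M g / N g). split; auto.
    exists (N g), (M g). repeat split; auto using is_cRInt_R2_is_int_R2.
Qed.

Section TwoMeters.
Variables (n : nat) (A1 A2 T1i T21 Tf2 : Mat) (pi pf : Vec) (u1 u2 : nat -> Vec) (a1 a2 : nat -> R).
Variable sigma : R.
Hypothesis hs : 0 < sigma.
Hypothesis S1 : spectral_decomp n A1 u1 a1.
Hypothesis S2 : spectral_decomp n A2 u2 a2.

Local Notation c := (path_amp n T1i T21 Tf2 u1 u2 pi pf).

Definition amp1 : C := inner n pf (mv n Tf2 (mv n T21 (mv n A1 (mv n T1i pi)))).
Definition amp2 : C := inner n pf (mv n Tf2 (mv n A2 (mv n T21 (mv n T1i pi)))).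
Definition amp21 : C := inner n pf (mv n Tf2 (mv n A2 (mv n T21 (mv n A1 (mv n T1i pi))))).

Definition weighted_amp (al be : nat -> R) : C := dsum n (fun j k => Cmul (RtoC (be k * al j)) (c j k)).

Definition path_ipr k k' j j' : R := ipr (c j k) (c j' k').
Definition path_cross k k' j j' : R := Im (c j k) * Re (c j' k') - Re (c j k) * Im (c j' k').

Lemma amp0_weighted : amp0 n T1i T21 Tf2 pi pf = weighted_amp (fun _ => 1) (fun _ => 1).
Proof.
  exact (sandwich_expand n T1i T21 Tf2 u1 u2 pi pf (fun v => v) (fun v => v) _ _
           (spectral_action_id n A1 u1 a1 S1) (spectral_action_id n A2 u2 a2 S2)).
Qed.

Lemma amp1_weighted : amp1 = weighted_amp a1 (fun _ => 1).
Proof.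
  exact (sandwich_expand n T1i T21 Tf2 u1 u2 pi pf (mv n A1) (fun v => v) _ _
           (spectral_action_mv n A1 u1 a1 S1) (spectral_action_id n A2 u2 a2 S2)).
Qed.

Lemma amp2_weighted : amp2 = weighted_amp (fun _ => 1) a2.
Proof.
  exact (sandwich_expand n T1i T21 Tf2 u1 u2 pi pf (fun v => v) (mv n A2) _ _
           (spectral_action_id n A1 u1 a1 S1) (spectral_action_mv n A2 u2 a2 S2)).
Qed.

Lemma amp21_weighted : amp21 = weighted_amp a1 a2.
Proof.
  exact (sandwich_expand n T1i T21 Tf2 u1 u2 pi pf (mv n A1) (mv n A2) _ _
           (spectral_action_mv n A1 u1 a1 S1) (spectral_action_mv n A2 u2 a2 S2)).
Qed.

Lemma ipr_weighted_amp al be al' be' :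
  ipr (weighted_amp al be) (weighted_amp al' be') =
  rsum4 n (fun k k' j j' => be k * al j * (be' k' * al' j') * path_ipr k k' j j').
Proof.
  unfold weighted_amp. rewrite ipr_dsum. apply rsum4_ext; intros.
  unfold path_ipr, ipr. C_unfold. ring.
Qed.

Lemma Cnorm2_amp0 : Cnorm2 (amp0 n T1i T21 Tf2 pi pf) = rsum4 n path_ipr.
Proof.
  change (Cnorm2 ?z) with (ipr z z). rewrite amp0_weighted, ipr_weighted_amp.
  apply rsum4_ext; intros; ring.
Qed.

(* Expanding [(a1_j + s a1_j')(a2_k + s a2_k')] produces the four products of weak-value numerators. *)
Lemma path_ipr_eigen_sum s :
  rsum4 n (fun k k' j j' => path_ipr k k' j j' * ((a1 j + s * a1 j') * (a2 k + s * a2 k'))) =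
  (1 + s * s) * ipr amp21 (amp0 n T1i T21 Tf2 pi pf) + 2 * s * ipr amp1 amp2.
Proof.
  replace ((1 + s * s) * ipr amp21 (amp0 n T1i T21 Tf2 pi pf) + 2 * s * ipr amp1 amp2)
    with (ipr amp21 (amp0 n T1i T21 Tf2 pi pf) + s * s * ipr (amp0 n T1i T21 Tf2 pi pf) amp21 +
          s * ipr amp1 amp2 + s * ipr amp2 amp1)
    by (rewrite (ipr_comm (amp0 _ _ _ _ _ _)), (ipr_comm amp2); ring).
  rewrite amp0_weighted, amp1_weighted, amp2_weighted, amp21_weighted, !ipr_weighted_amp,
    <- !rsum4_scal, <- !rsum4_plus.
  apply rsum4_ext; intros; ring.
Qed.

Lemma Cnorm2_postsel_PsiX g x1 x2 :
  Cnorm2 (postsel n pf (PsiX n T1i T21 Tf2 u1 u2 a1 a2 sigma g pi) x1 x2) =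
  rsum4 n (fun k k' j j' => path_ipr k k' j j' *
    ((phi sigma (x1 - g * a1 j) * phi sigma (x1 - g * a1 j')) *
     (phi sigma (x2 - g * a2 k) * phi sigma (x2 - g * a2 k')))).
Proof.
  change (Cnorm2 ?z) with (ipr z z). rewrite postsel_PsiX_expand, ipr_dsum.
  apply rsum4_ext; intros. unfold path_ipr, ipr. C_unfold. ring.
Qed.

(* The phases [e^{-i g a k}] of two paths interfere through the cosine and sine of their difference. *)
Lemma Cnorm2_postsel_PsiK g k1 k2 :
  Cnorm2 (postsel n pf (PsiK n T1i T21 Tf2 u1 u2 a1 a2 sigma g pi) k1 k2) =
  rsum4 n (fun k k' j j' => interference (path_ipr k k' j j') (path_cross k k' j j')
    (phit_cos sigma (g * (a1 j - a1 j'))) (phit_sin sigma (g * (a1 j - a1 j')))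
    (phit_cos sigma (g * (a2 k - a2 k'))) (phit_sin sigma (g * (a2 k - a2 k'))) k1 k2).
Proof.
  change (Cnorm2 ?z) with (ipr z z). rewrite postsel_PsiK_expand, ipr_dsum.
  apply rsum4_ext; intros k k' j j' _ _ _ _.
  unfold interference, path_ipr, path_cross, phit_cos, phit_sin, phit_sq, ipr.
  replace (g * (a1 j - a1 j') * k1) with (- g * a1 j' * k1 - - g * a1 j * k1) by ring.
  replace (g * (a2 k - a2 k') * k2) with (- g * a2 k' * k2 - - g * a2 k * k2) by ring.
  rewrite !cos_minus, !sin_minus. C_unfold. ring.
Qed.

Local Notation W0 := (amp0 n T1i T21 Tf2 pi pf).

Lemma Re_weak21 : Cnorm2 W0 <> 0 -> Re (weak21 n A1 A2 T1i T21 Tf2 pi pf) = ipr amp21 W0 / Cnorm2 W0.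
Proof. apply Re_Cdiv. Qed.

Lemma Re_weak_product : Cnorm2 W0 <> 0 ->
  Re (Cmul (Cconj (weak1 n A1 T1i T21 Tf2 pi pf)) (weak2 n A2 T1i T21 Tf2 pi pf)) =
  ipr amp1 amp2 / Cnorm2 W0.
Proof. apply Re_Cconj_Cdiv_mul. Qed.

Definition overlap_rate k k' j j' : R :=
  ((a1 j - a1 j') * (a1 j - a1 j') + (a2 k - a2 k') * (a2 k - a2 k')) / (8 * sigma ^ 2).

Lemma phi_overlap_near_1 g k k' j j' :
  Rabs (phi_overlap sigma (g * a1 j - g * a1 j') * phi_overlap sigma (g * a2 k - g * a2 k') - 1)
  <= g ^ 2 * overlap_rate k k' j j'.
Proof.
  eapply Rle_trans; [apply Rabs_phi_overlap_mul_sub_1_le; auto|].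
  right. unfold overlap_rate. field. lra.
Qed.

Definition x_scale : R := phi_const sigma * phi_const sigma * gauss_x_mass sigma.

Definition x_norm g : R := rsum4 n (fun k k' j j' => path_ipr k k' j j' *
  ((phi_const sigma * phi_const sigma * phi_overlap sigma (g * a1 j - g * a1 j') * gauss_x_mass sigma) *
   (phi_const sigma * phi_const sigma * phi_overlap sigma (g * a2 k - g * a2 k') * gauss_x_mass sigma))).

Definition x_corr g : R := rsum4 n (fun k k' j j' => path_ipr k k' j j' *
  ((phi_const sigma * phi_const sigma * phi_overlap sigma (g * a1 j - g * a1 j') *
      ((g * a1 j + g * a1 j') / 2 * gauss_x_mass sigma)) *
   (phi_const sigma * phi_const sigma * phi_overlap sigma (g * a2 k - g * a2 k') *
      ((g * a2 k + g * a2 k') / 2 * gauss_x_mass sigma)))).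

Lemma is_cRInt_R2_x_dist g :
  is_cRInt_R2 (fun x1 x2 => Cnorm2 (postsel n pf (PsiX n T1i T21 Tf2 u1 u2 a1 a2 sigma g pi) x1 x2))
              (x_norm g).
Proof.
  pose (F k k' j j' x1 x2 := path_ipr k k' j j' *
    ((phi sigma (x1 - g * a1 j) * phi sigma (x1 - g * a1 j')) *
     (phi sigma (x2 - g * a2 k) * phi sigma (x2 - g * a2 k')))).
  apply (is_cRInt_R2_ext (fun x1 x2 => rsum4 n (fun k k' j j' => F k k' j j' x1 x2)));
    [intros; rewrite Cnorm2_postsel_PsiX; reflexivity|].
  apply is_cRInt_R2_rsum4. intros. unfold F.
  apply is_cRInt_R2_scal, is_cRInt_R2_prod; apply is_cRInt_R_phi_mul_phi; auto.
Qed.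

Lemma is_cRInt_R2_x_corr g :
  is_cRInt_R2 (fun x1 x2 => x1 * x2 *
                 Cnorm2 (postsel n pf (PsiX n T1i T21 Tf2 u1 u2 a1 a2 sigma g pi) x1 x2))
              (x_corr g).
Proof.
  pose (F k k' j j' x1 x2 := path_ipr k k' j j' *
    ((x1 * (phi sigma (x1 - g * a1 j) * phi sigma (x1 - g * a1 j'))) *
     (x2 * (phi sigma (x2 - g * a2 k) * phi sigma (x2 - g * a2 k'))))).
  apply (is_cRInt_R2_ext (fun x1 x2 => rsum4 n (fun k k' j j' => F k k' j j' x1 x2))).
  { intros x1 x2. rewrite Cnorm2_postsel_PsiX, <- rsum4_scal.
    apply rsum4_ext; intros. unfold F. ring. }
  apply is_cRInt_R2_rsum4. intros. unfold F.
  apply is_cRInt_R2_scal, is_cRInt_R2_prod; apply is_cRInt_R_id_phi_mul_phi; auto.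
Qed.

Lemma x_scale_pos : 0 < x_scale.
Proof.
  unfold x_scale. pose proof (gauss_x_mass_pos sigma hs).
  assert (0 < phi_const sigma) by apply exp_pos.
  apply Rmult_lt_0_compat; [apply Rmult_lt_0_compat|]; auto.
Qed.

Lemma overlap_rate_nonneg k k' j j' : 0 <= overlap_rate k k' j j'.
Proof.
  unfold overlap_rate. apply Rdiv_le_0_compat; [|nra].
  apply Rplus_le_le_0_compat; apply Rle_0_sqr.
Qed.

Definition x_norm0 : R := x_scale * x_scale * Cnorm2 W0.

Definition x_corr0 : R := x_scale * x_scale / 4 *
  rsum4 n (fun k k' j j' => path_ipr k k' j j' * ((a1 j + 1 * a1 j') * (a2 k + 1 * a2 k'))).

Definition x_err_norm : R :=
  rsum4 n (fun k k' j j' => Rabs (x_scale * x_scale * path_ipr k k' j j') * overlap_rate k k' j j').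

Definition x_err_corr : R := rsum4 n (fun k k' j j' =>
  Rabs (x_scale * x_scale / 4 * (path_ipr k k' j j' * ((a1 j + 1 * a1 j') * (a2 k + 1 * a2 k')))) *
  overlap_rate k k' j j').

Lemma x_norm_approx g : Rabs (x_norm g - x_norm0) <= g ^ 2 * x_err_norm.
Proof.
  replace (x_norm g) with (rsum4 n (fun k k' j j' => x_scale * x_scale * path_ipr k k' j j' *
    (phi_overlap sigma (g * a1 j - g * a1 j') * phi_overlap sigma (g * a2 k - g * a2 k'))))
    by (apply rsum4_ext; intros; unfold x_scale; ring).
  unfold x_norm0. rewrite Cnorm2_amp0, <- rsum4_scal.
  rewrite (rsum4_ext n (fun k k' j j' => x_scale * x_scale * path_ipr k k' j j')
                       (fun k k' j j' => x_scale * x_scale * path_ipr k k' j j' * 1)) by (intros; ring).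
  apply rsum4_weighted_dist_le. intros. apply phi_overlap_near_1.
Qed.

Lemma x_corr_approx g : Rabs (x_corr g - g ^ 2 * x_corr0) <= g ^ 4 * x_err_corr.
Proof.
  pose (V k k' j j' := x_scale * x_scale / 4 * (path_ipr k k' j j' * ((a1 j + 1 * a1 j') * (a2 k + 1 * a2 k')))).
  assert (Hcorr : x_corr g = g ^ 2 * rsum4 n (fun k k' j j' => V k k' j j' *
    (phi_overlap sigma (g * a1 j - g * a1 j') * phi_overlap sigma (g * a2 k - g * a2 k'))))
    by (rewrite <- rsum4_scal; apply rsum4_ext; intros; unfold V, x_scale; field).
  assert (Hlim : x_corr0 = rsum4 n (fun k k' j j' => V k k' j j' * 1))
    by (unfold x_corr0; rewrite <- rsum4_scal; apply rsum4_ext; intros; unfold V; ring).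
  rewrite Hcorr, Hlim, <- Rmult_minus_distr_l, Rabs_mult, Rabs_right by (apply Rle_ge, pow2_ge_0).
  replace (g ^ 4) with (g ^ 2 * g ^ 2) by ring. rewrite Rmult_assoc.
  apply Rmult_le_compat_l; [apply pow2_ge_0|].
  apply rsum4_weighted_dist_le. intros. apply phi_overlap_near_1.
Qed.

Lemma x_err_norm_nonneg : 0 <= x_err_norm.
Proof. apply rsum4_nonneg; intros; apply Rmult_le_pos; [apply Rabs_pos | apply overlap_rate_nonneg]. Qed.

Lemma x_err_corr_nonneg : 0 <= x_err_corr.
Proof. apply rsum4_nonneg; intros; apply Rmult_le_pos; [apply Rabs_pos | apply overlap_rate_nonneg]. Qed.

Lemma x_leading : 0 < Cnorm2 W0 ->
  x_corr0 / x_norm0 = / 2 * Re (Cadd (weak21 n A1 A2 T1i T21 Tf2 pi pf)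
                                (Cmul (Cconj (weak1 n A1 T1i T21 Tf2 pi pf)) (weak2 n A2 T1i T21 Tf2 pi pf))).
Proof.
  intros hW0. pose proof x_scale_pos.
  unfold x_corr0, x_norm0. rewrite Re_Cadd, Re_weak21, Re_weak_product, path_ipr_eigen_sum by lra.
  field. split; lra.
Qed.

Lemma x_mean_estimate : W0 <> C0 ->
  exists K delta, 0 <= K /\ 0 < delta /\ forall g, 0 < g < delta ->
    exists mx, mean2 (fun x1 x2 => Cnorm2 (postsel n pf (PsiX n T1i T21 Tf2 u1 u2 a1 a2 sigma g pi) x1 x2))
                     (fun x1 x2 => x1 * x2) mx /\
      Rabs (mx - g ^ 2 / 2 * Re (Cadd (weak21 n A1 A2 T1i T21 Tf2 pi pf)
               (Cmul (Cconj (weak1 n A1 T1i T21 Tf2 pi pf)) (weak2 n A2 T1i T21 Tf2 pi pf)))) <= K * g ^ 3.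
Proof.
  intros hW0. pose proof (Cnorm2_pos _ hW0) as hN. pose proof x_scale_pos.
  pose proof x_err_norm_nonneg. pose proof x_err_corr_nonneg.
  destruct (mean2_small_coupling
              (fun g x1 x2 => Cnorm2 (postsel n pf (PsiX n T1i T21 Tf2 u1 u2 a1 a2 sigma g pi) x1 x2))
              (fun x1 x2 => x1 * x2) x_norm x_corr x_norm0 x_corr0 (x_err_norm + x_err_corr))
    as [K [delta [hK [hdelta Hmean]]]];
    [unfold x_norm0; apply Rmult_lt_0_compat; [apply Rmult_lt_0_compat|]; auto
    | lra | apply is_cRInt_R2_x_dist | apply is_cRInt_R2_x_corr | |].
  { intros g hg. pose proof (x_norm_approx g). pose proof (x_corr_approx g).
    pose proof (pow2_ge_0 g). assert (0 <= g ^ 4) by (apply pow_le; lra). split; nra. }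
  exists K, delta. do 2 (split; auto). intros g hg.
  destruct (Hmean g hg) as [m [Hm Hbound]]. exists m. split; auto.
  rewrite x_leading in Hbound by lra. replace (g ^ 2 / 2) with (g ^ 2 * / 2) by reflexivity.
  rewrite Rmult_assoc. exact Hbound.
Qed.

Definition k_norm g : R := rsum4 n (fun k k' j j' => path_ipr k k' j j' *
  (phit_sq_cos sigma (g * (a1 j - a1 j')) * phit_sq_cos sigma (g * (a2 k - a2 k')))).

Definition k_corr g : R := rsum4 n (fun k k' j j' => path_ipr k k' j j' *
  - (phit_sq_ksin sigma (g * (a1 j - a1 j')) * phit_sq_ksin sigma (g * (a2 k - a2 k')))).

Lemma is_cRInt_R2_k_dist g :
  is_cRInt_R2 (fun k1 k2 => Cnorm2 (postsel n pf (PsiK n T1i T21 Tf2 u1 u2 a1 a2 sigma g pi) k1 k2))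
              (k_norm g).
Proof.
  pose (F k k' j j' := interference (path_ipr k k' j j') (path_cross k k' j j')
    (phit_cos sigma (g * (a1 j - a1 j'))) (phit_sin sigma (g * (a1 j - a1 j')))
    (phit_cos sigma (g * (a2 k - a2 k'))) (phit_sin sigma (g * (a2 k - a2 k')))).
  apply (is_cRInt_R2_ext (fun k1 k2 => rsum4 n (fun k k' j j' => F k k' j j' k1 k2)));
    [intros; rewrite Cnorm2_postsel_PsiK; reflexivity|].
  replace (k_norm g) with (rsum4 n (fun k k' j j' =>
    path_ipr k k' j j' * (phit_sq_cos sigma (g * (a1 j - a1 j')) * phit_sq_cos sigma (g * (a2 k - a2 k')) - 0 * 0) +
    path_cross k k' j j' * (0 * phit_sq_cos sigma (g * (a2 k - a2 k')) + phit_sq_cos sigma (g * (a1 j - a1 j')) * 0)))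
    by (apply rsum4_ext; intros; ring).
  apply is_cRInt_R2_rsum4. intros. unfold F.
  apply is_cRInt_R2_interference;
    [apply is_cRInt_R_phit_sq_cos | apply is_cRInt_R_phit_sq_sin
    |apply is_cRInt_R_phit_sq_cos | apply is_cRInt_R_phit_sq_sin]; auto.
Qed.

Lemma is_cRInt_R2_k_corr g :
  is_cRInt_R2 (fun k1 k2 => k1 * k2 *
                 Cnorm2 (postsel n pf (PsiK n T1i T21 Tf2 u1 u2 a1 a2 sigma g pi) k1 k2))
              (k_corr g).
Proof.
  pose (F k k' j j' := interference (path_ipr k k' j j') (path_cross k k' j j')
    (fun y => y * phit_cos sigma (g * (a1 j - a1 j')) y) (fun y => y * phit_sin sigma (g * (a1 j - a1 j')) y)
    (fun y => y * phit_cos sigma (g * (a2 k - a2 k')) y) (fun y => y * phit_sin sigma (g * (a2 k - a2 k')) y)).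
  apply (is_cRInt_R2_ext (fun k1 k2 => rsum4 n (fun k k' j j' => F k k' j j' k1 k2))).
  { intros k1 k2. rewrite Cnorm2_postsel_PsiK, <- rsum4_scal.
    apply rsum4_ext; intros. unfold F, interference. ring. }
  replace (k_corr g) with (rsum4 n (fun k k' j j' =>
    path_ipr k k' j j' * (0 * 0 - phit_sq_ksin sigma (g * (a1 j - a1 j')) * phit_sq_ksin sigma (g * (a2 k - a2 k'))) +
    path_cross k k' j j' * (phit_sq_ksin sigma (g * (a1 j - a1 j')) * 0 + 0 * phit_sq_ksin sigma (g * (a2 k - a2 k')))))
    by (apply rsum4_ext; intros; ring).
  assert (Hcos : forall u, is_cRInt_R (fun y => y * phit_cos sigma u y) 0)
    by (intros u; eapply is_cRInt_R_ext; [|apply (is_cRInt_R_phit_sq_kcos sigma hs u)];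
        intros; unfold phit_cos; ring).
  assert (Hsin : forall u, is_cRInt_R (fun y => y * phit_sin sigma u y) (phit_sq_ksin sigma u))
    by (intros u; eapply is_cRInt_R_ext; [|apply (is_cRInt_R_phit_sq_ksin sigma hs u)];
        intros; unfold phit_sin; ring).
  apply is_cRInt_R2_rsum4. intros. unfold F. apply is_cRInt_R2_interference; auto.
Qed.

Definition k_norm_rate k k' j j' : R :=
  phit_sq_mass sigma * phit_sq_mom2 sigma / 2 *
  ((a1 j - a1 j') * (a1 j - a1 j') + (a2 k - a2 k') * (a2 k - a2 k')).

Definition k_corr_rate k k' j j' : R :=
  let e1 := Rabs (a1 j - a1 j') * Rabs (a1 j - a1 j') * Rabs (a1 j - a1 j') / 6 * phit_sq_mom4 sigma in
  let e2 := Rabs (a2 k - a2 k') * Rabs (a2 k - a2 k') * Rabs (a2 k - a2 k') / 6 * phit_sq_mom4 sigma in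
  Rabs ((a1 j - a1 j') * phit_sq_mom2 sigma) * e2 + e1 * Rabs ((a2 k - a2 k') * phit_sq_mom2 sigma) + e1 * e2.

Definition k_norm0 : R := phit_sq_mass sigma * phit_sq_mass sigma * Cnorm2 W0.

Definition k_corr0 : R := - (phit_sq_mom2 sigma * phit_sq_mom2 sigma) *
  rsum4 n (fun k k' j j' => path_ipr k k' j j' * ((a1 j + -1 * a1 j') * (a2 k + -1 * a2 k'))).

Definition k_err_norm : R := rsum4 n (fun k k' j j' => Rabs (path_ipr k k' j j') * k_norm_rate k k' j j').

Definition k_err_corr : R := rsum4 n (fun k k' j j' => Rabs (path_ipr k k' j j') * k_corr_rate k k' j j').

Lemma k_err_norm_nonneg : 0 <= k_err_norm.
Proof.
  pose proof (phit_sq_mass_pos sigma hs). pose proof (phit_sq_mom2_nonneg sigma hs).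
  apply rsum4_nonneg; intros; apply Rmult_le_pos; [apply Rabs_pos|]. unfold k_norm_rate.
  apply Rmult_le_pos; [unfold Rdiv; repeat apply Rmult_le_pos; lra|].
  apply Rplus_le_le_0_compat; apply Rle_0_sqr.
Qed.

Lemma k_err_corr_nonneg : 0 <= k_err_corr.
Proof.
  pose proof (phit_sq_mom4_nonneg sigma hs).
  apply rsum4_nonneg; intros; apply Rmult_le_pos; [apply Rabs_pos|]. unfold k_corr_rate, Rdiv. cbv zeta.
  repeat (apply Rplus_le_le_0_compat || apply Rmult_le_pos); try apply Rabs_pos; lra.
Qed.

Lemma k_norm_approx g : Rabs (k_norm g - k_norm0) <= g ^ 2 * k_err_norm.
Proof.
  unfold k_norm0. rewrite Cnorm2_amp0, <- rsum4_scal.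
  rewrite (rsum4_ext n (fun k k' j j' => _ * path_ipr k k' j j')
             (fun k k' j j' => path_ipr k k' j j' * (phit_sq_mass sigma * phit_sq_mass sigma)))
    by (intros; ring).
  apply rsum4_weighted_dist_le. intros k k' j j' _ _ _ _.
  eapply Rle_trans.
  - apply Rabs_mul_sub_sq_le; auto using Rabs_phit_sq_cos_sub_mass_le, Rabs_phit_sq_cos_le.
  - right. unfold k_norm_rate. unfold Rdiv. ring.
Qed.

Lemma k_corr_approx g : 0 < g <= 1 -> Rabs (k_corr g - g ^ 2 * k_corr0) <= g ^ 4 * k_err_corr.
Proof.
  intros hg.
  assert (Hlim : g ^ 2 * k_corr0 =
    rsum4 n (fun k k' j j' => path_ipr k k' j j' *
      - (g ^ 2 * (((a1 j - a1 j') * phit_sq_mom2 sigma) * ((a2 k - a2 k') * phit_sq_mom2 sigma)))))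
    by (unfold k_corr0; rewrite <- !rsum4_scal; apply rsum4_ext; intros; ring).
  rewrite Hlim. unfold k_corr.
  apply rsum4_weighted_dist_le. intros k k' j j' _ _ _ _.
  match goal with |- Rabs (- ?x - - ?y) <= _ => replace (- x - - y) with (- (x - y)) by ring end.
  rewrite Rabs_Ropp. unfold k_corr_rate. cbv zeta.
  pose proof (phit_sq_mom4_nonneg sigma hs).
  assert (Hcube : forall d, 0 <= Rabs d * Rabs d * Rabs d / 6 * phit_sq_mom4 sigma).
  { intros d. pose proof (Rabs_pos d). unfold Rdiv.
    apply Rmult_le_pos; [repeat apply Rmult_le_pos|]; lra. }
  apply Rabs_mul_sub_approx_le; auto; try lra; apply Rabs_phit_sq_ksin_mul_sub_le; lra.
Qed.

(* [phit_sq_mom2 = phit_sq_mass / (4 sigma^2)] turns [- phit_sq_mom2^2 / phit_sq_mass^2] into [- 1 / (16 sigma^4)]. *)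
Lemma k_leading : 0 < Cnorm2 W0 ->
  k_corr0 / k_norm0 = / (8 * sigma ^ 4) *
    Re (Cadd (Cmul (RtoC (-1)) (weak21 n A1 A2 T1i T21 Tf2 pi pf))
             (Cmul (Cconj (weak1 n A1 T1i T21 Tf2 pi pf)) (weak2 n A2 T1i T21 Tf2 pi pf))).
Proof.
  intros hW0. pose proof (phit_sq_mass_pos sigma hs).
  unfold k_corr0, k_norm0.
  rewrite Re_Cadd, Re_Cmul_RtoC, Re_weak21, Re_weak_product, path_ipr_eigen_sum, phit_sq_mom2_eq by lra.
  field. repeat split; lra.
Qed.

Lemma k_mean_estimate : W0 <> C0 ->
  exists K delta, 0 <= K /\ 0 < delta /\ forall g, 0 < g < delta ->
    exists mk, mean2 (fun k1 k2 => Cnorm2 (postsel n pf (PsiK n T1i T21 Tf2 u1 u2 a1 a2 sigma g pi) k1 k2))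
                     (fun k1 k2 => k1 * k2) mk /\
      Rabs (mk - g ^ 2 / (8 * sigma ^ 4) * Re (Cadd (Cmul (RtoC (-1)) (weak21 n A1 A2 T1i T21 Tf2 pi pf))
               (Cmul (Cconj (weak1 n A1 T1i T21 Tf2 pi pf)) (weak2 n A2 T1i T21 Tf2 pi pf)))) <= K * g ^ 3.
Proof.
  intros hW0. pose proof (Cnorm2_pos _ hW0) as hN. pose proof (phit_sq_mass_pos sigma hs).
  pose proof k_err_norm_nonneg. pose proof k_err_corr_nonneg.
  destruct (mean2_small_coupling
              (fun g k1 k2 => Cnorm2 (postsel n pf (PsiK n T1i T21 Tf2 u1 u2 a1 a2 sigma g pi) k1 k2))
              (fun k1 k2 => k1 * k2) k_norm k_corr k_norm0 k_corr0 (k_err_norm + k_err_corr))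
    as [K [delta [hK [hdelta Hmean]]]];
    [unfold k_norm0; apply Rmult_lt_0_compat; [apply Rmult_lt_0_compat|]; auto
    | lra | apply is_cRInt_R2_k_dist | apply is_cRInt_R2_k_corr | |].
  { intros g hg. pose proof (k_norm_approx g). pose proof (k_corr_approx g hg).
    pose proof (pow2_ge_0 g). assert (0 <= g ^ 4) by (apply pow_le; lra). split; nra. }
  exists K, delta. do 2 (split; auto). intros g hg.
  destruct (Hmean g hg) as [m [Hm Hbound]]. exists m. split; auto.
  rewrite k_leading in Hbound by lra.
  replace (g ^ 2 / (8 * sigma ^ 4)) with (g ^ 2 * / (8 * sigma ^ 4)) by reflexivity.
  rewrite Rmult_assoc. exact Hbound.
Qed.
End TwoMeters.

Lemma Re_weak21_from_means (w21 X : C) mx mk g K s : 0 < g -> 0 < s ->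
  Rabs (mx - g ^ 2 / 2 * Re (Cadd w21 X)) <= K * g ^ 3 ->
  Rabs (mk - g ^ 2 / (8 * s) * Re (Cadd (Cmul (RtoC (-1)) w21) X)) <= K * g ^ 3 ->
  Rabs (Re w21 - / g ^ 2 * (mx - 4 * s * mk)) <= K * (1 + 4 * s) * g.
Proof.
  intros hg hs Hx Hk. C_unfold.
  assert (hg2 : 0 < g ^ 2) by (apply pow_lt; lra).
  replace (Re w21 - / g ^ 2 * (mx - 4 * s * mk))
    with (- / g ^ 2 * ((mx - g ^ 2 / 2 * (Re w21 + Re X))
                       - 4 * s * (mk - g ^ 2 / (8 * s) * ((-1 * Re w21 - 0 * Im w21) + Re X))))
    by (field; lra).
  rewrite Rabs_mult, Rabs_Ropp, Rabs_right by (left; apply Rinv_0_lt_compat; lra).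
  apply Rle_trans with (/ g ^ 2 * (K * g ^ 3 + 4 * s * (K * g ^ 3))).
  - apply Rmult_le_compat_l; [left; apply Rinv_0_lt_compat; lra|].
    eapply Rle_trans; [apply Rabs_triang|].
    rewrite Rabs_Ropp, Rabs_mult, (Rabs_right (4 * s)) by lra.
    apply Rplus_le_compat; [auto | apply Rmult_le_compat_l; lra].
  - right. field. lra.
Qed.

Theorem mainTheorem7 (n : nat) (A1 A2 T1i T21 Tf2 : Mat) (psi_i psi_f : Vec)
  (u1 u2 : nat -> Vec) (a1 a2 : nat -> R) (sigma : R) :
  0 < sigma ->
  self_adjoint n A1 -> self_adjoint n A2 ->
  spectral_decomp n A1 u1 a1 -> spectral_decomp n A2 u2 a2 ->
  unitary n T1i -> unitary n T21 -> unitary n Tf2 ->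
  unit_vec n psi_i -> unit_vec n psi_f ->
  amp0 n T1i T21 Tf2 psi_i psi_f <> C0 ->
  let w1 := weak1 n A1 T1i T21 Tf2 psi_i psi_f in
  let w2 := weak2 n A2 T1i T21 Tf2 psi_i psi_f in
  let w21 := weak21 n A1 A2 T1i T21 Tf2 psi_i psi_f in
  exists K delta, 0 < delta /\
    forall g, 0 < g < delta ->
      exists mx mk,
        mean2 (fun x1 x2 => Cnorm2 (postsel n psi_f
                  (PsiX n T1i T21 Tf2 u1 u2 a1 a2 sigma g psi_i) x1 x2))
              (fun x1 x2 => x1 * x2) mx /\
        mean2 (fun k1 k2 => Cnorm2 (postsel n psi_f
                  (PsiK n T1i T21 Tf2 u1 u2 a1 a2 sigma g psi_i) k1 k2))
              (fun k1 k2 => k1 * k2) mk /\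
        Rabs (mx - g ^ 2 / 2 * Re (Cadd w21 (Cmul (Cconj w1) w2))) <= K * g ^ 3 /\
        Rabs (mk - g ^ 2 / (8 * sigma ^ 4) *
                Re (Cadd (Cmul (RtoC (-1)) w21) (Cmul (Cconj w1) w2))) <= K * g ^ 3 /\
        Rabs (Re w21 - / g ^ 2 * (mx - 4 * sigma ^ 4 * mk)) <= K * g.
Proof.
  intros hs _ _ S1 S2 _ _ _ _ _ hW0 w1 w2 w21.
  destruct (x_mean_estimate n A1 A2 T1i T21 Tf2 psi_i psi_f u1 u2 a1 a2 sigma hs S1 S2 hW0)
    as [Kx [dx [hKx [hdx Hx]]]].
  destruct (k_mean_estimate n A1 A2 T1i T21 Tf2 psi_i psi_f u1 u2 a1 a2 sigma hs S1 S2 hW0)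
    as [Kk [dk [hKk [hdk Hk]]]].
  assert (hs4 : 0 < sigma ^ 4) by (apply pow_lt; lra).
  exists ((Kx + Kk) * (1 + 4 * sigma ^ 4)), (Rmin dx dk).
  split; [apply Rmin_glb_lt; auto|]. intros g [hg hgd].
  pose proof (Rmin_l dx dk). pose proof (Rmin_r dx dk).
  destruct (Hx g ltac:(lra)) as [mx [Hmx Ex]]. destruct (Hk g ltac:(lra)) as [mk [Hmk Ek]].
  assert (hg3 : 0 < g ^ 3) by (apply pow_lt; lra).
  assert (Ex' : Rabs (mx - g ^ 2 / 2 * Re (Cadd w21 (Cmul (Cconj w1) w2))) <= (Kx + Kk) * g ^ 3)
    by (eapply Rle_trans; [exact Ex | apply Rmult_le_compat_r; lra]).
  assert (Ek' : Rabs (mk - g ^ 2 / (8 * sigma ^ 4) *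
                  Re (Cadd (Cmul (RtoC (-1)) w21) (Cmul (Cconj w1) w2))) <= (Kx + Kk) * g ^ 3)
    by (eapply Rle_trans; [exact Ek | apply Rmult_le_compat_r; lra]).
  exists mx, mk. repeat split; auto.
  - eapply Rle_trans; [exact Ex' | apply Rmult_le_compat_r; nra].
  - eapply Rle_trans; [exact Ek' | apply Rmult_le_compat_r; nra].
  - apply (Re_weak21_from_means w21 (Cmul (Cconj w1) w2)); auto.
Qed.
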